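(* Let $K_n$ ($n\ge1$) and $K$ be unconstrained Sierpinski carpets with the same $k,N$, generated by $\{\Psi_{n,i}\}_{i=1}^N$ and $\{\Psi_i\}_{i=1}^N$ and indexed so that $\Psi_{n,i}\to\Psi_i$, and assume $K_n\to K$ in the Hausdorff metric and that the geodesic metrics $d_{G,n}$ on $K_n$, $n\ge1$, are equicontinuous. Then there exists $C>0$ depending on $K$ such that $\limsup_{n\to\infty}d_{G,n}(x_n,y_n)\le C\,d_G(x,y)$ for any $x,y\in K$ and $x_n,y_n\in K_n$ with $x_n\to x$, $y_n\to y$, where $d_G$ is the geodesic metric on $K$.
   Context: USC: integers $k\ge3$, $4(k-1)\le N\le k^2-1$; maps $\Psi_i(x)=x/k+c_i$ on $\square=[0,1]^2$ with pairwise intersections of the $\Psi_i(\square)$ a segment, point or empty, $\bigcup_i\Psi_i(\square)$ connected and invariant under the 8 isometries of $\square$, $[0,1]\times\{0\}\subset\bigcup_i\Psi_i(\square)\subset\square$; $K=\bigcup_i\Psi_iK$. Geodesic metric: infimum of lengths of rectifiable curves in the set joining the points. Equicontinuity of $d_{G,n}$: $\lim_{\eta\to0}\sup_n\sup\{|d_{G,n}(p)-d_{G,n}(p')|:p,p'\in K_n\times K_n,|p-p'|<\eta\}=0$ (Euclidean norm in $\mathbb{R}^4$). *)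

From Stdlib Require Import Reals Lra.
From Coquelicot Require Import Coquelicot.
Open Scope R_scope.

Definition pt : Type := (R * R)%type.

Definition dist2 (p q : pt) : R :=
  sqrt ((fst p - fst q) ^ 2 + (snd p - snd q) ^ 2).

Definition dist4 (p p' q q' : pt) : R :=
  sqrt ((fst p - fst q) ^ 2 + (snd p - snd q) ^ 2
        + (fst p' - fst q') ^ 2 + (snd p' - snd q') ^ 2).

Definition unit_square (p : pt) : Prop :=
  0 <= fst p <= 1 /\ 0 <= snd p <= 1.

Definition Psi (k : nat) (c : pt) (x : pt) : pt :=
  (fst x / INR k + fst c, snd x / INR k + snd c).

Definition image (f : pt -> pt) (A : pt -> Prop) (p : pt) : Prop :=
  exists x, A x /\ p = f x.

Definition segment (a b : pt) (p : pt) : Prop :=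
  exists t, 0 <= t <= 1 /\
    p = (fst a + t * (fst b - fst a), snd a + t * (snd b - snd a)).

Definition set_eq (A B : pt -> Prop) : Prop := forall p, A p <-> B p.

Definition seg_point_or_empty (A : pt -> Prop) : Prop :=
  set_eq A (fun _ => False) \/
  (exists a, set_eq A (fun p => p = a)) \/
  (exists a b, set_eq A (segment a b)).

Definition open2 (U : pt -> Prop) : Prop :=
  forall p, U p -> exists e, 0 < e /\ forall q, dist2 p q < e -> U q.

Definition connected2 (A : pt -> Prop) : Prop :=
  ~ (exists U V, open2 U /\ open2 V /\
       (forall p, A p -> U p \/ V p) /\
       (exists p, A p /\ U p) /\ (exists p, A p /\ V p) /\
       (forall p, A p -> U p -> V p -> False)).

Definition closed2 (A : pt -> Prop) : Prop :=
  forall p, (forall e, 0 < e -> exists q, A q /\ dist2 p q < e) -> A p.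

Definition bounded2 (A : pt -> Prop) : Prop :=
  exists M, forall p, A p -> dist2 p (0, 0) <= M.

Definition D4 : list (pt -> pt) :=
  (fun p => (fst p, snd p)) :: (fun p => (1 - fst p, snd p)) ::
  (fun p => (fst p, 1 - snd p)) :: (fun p => (1 - fst p, 1 - snd p)) ::
  (fun p => (snd p, fst p)) :: (fun p => (1 - snd p, fst p)) ::
  (fun p => (snd p, 1 - fst p)) :: (fun p => (1 - snd p, 1 - fst p)) :: nil.

Definition invariant_under (g : pt -> pt) (A : pt -> Prop) : Prop :=
  set_eq (image g A) A.

Definition cell (k : nat) (c : nat -> pt) (i : nat) : pt -> Prop :=
  image (Psi k (c i)) unit_square.

Definition first_level (k N : nat) (c : nat -> pt) (p : pt) : Prop :=
  exists i, (i < N)%nat /\ cell k c i p.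

(** Unconstrained Sierpinski carpet with parameters k, N, translation
    vectors c_0..c_{N-1}, and attractor K (nonempty compact, K = U Psi_i K). *)
Definition is_USC (k N : nat) (c : nat -> pt) (K : pt -> Prop) : Prop :=
  (3 <= k)%nat /\ (4 * (k - 1) <= N)%nat /\ (N <= k * k - 1)%nat /\
  (forall i j, (i < N)%nat -> (j < N)%nat -> i <> j ->
     seg_point_or_empty (fun p => cell k c i p /\ cell k c j p)) /\
  connected2 (first_level k N c) /\
  (forall g, List.In g D4 -> invariant_under g (first_level k N c)) /\
  (forall x, 0 <= x <= 1 -> first_level k N c (x, 0)) /\
  (forall p, first_level k N c p -> unit_square p) /\
  (exists p, K p) /\ closed2 K /\ bounded2 K /\
  set_eq K (fun p => exists i, (i < N)%nat /\ image (Psi k (c i)) K p).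

(** Curves: gamma restricted to [0,1], continuous there, valued in A. *)
Definition curve_in (A : pt -> Prop) (x y : pt) (g : R -> pt) : Prop :=
  g 0 = x /\ g 1 = y /\
  (forall t, 0 <= t <= 1 -> A (g t)) /\
  (forall t, 0 <= t <= 1 -> forall e, 0 < e -> exists d, 0 < d /\
     forall s, 0 <= s <= 1 -> Rabs (s - t) < d -> dist2 (g s) (g t) < e).

Fixpoint poly_sum (g : R -> pt) (t : nat -> R) (m : nat) : R :=
  match m with
  | O => 0
  | S m' => poly_sum g t m' + dist2 (g (t m')) (g (t (S m')))
  end.

Definition curve_length (g : R -> pt) : Rbar :=
  Lub_Rbar (fun s => exists (m : nat) (t : nat -> R),
    t O = 0 /\ t m = 1 /\ (forall j, (j < m)%nat -> t j < t (S j)) /\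
    s = poly_sum g t m).

(** Geodesic metric on A: infimum of the lengths of rectifiable curves in A
    joining x and y (+oo if there is none). *)
Definition geodist (A : pt -> Prop) (x y : pt) : Rbar :=
  Glb_Rbar (fun L => exists g, curve_in A x y g /\ curve_length g = Finite L).

Definition pt_conv (u : nat -> pt) (l : pt) : Prop :=
  forall e, 0 < e -> exists M, forall n, (M <= n)%nat -> dist2 (u n) l < e.

(** Convergence in the Hausdorff metric (d_H(A_n, A) -> 0). *)
Definition hausdorff_conv (An : nat -> pt -> Prop) (A : pt -> Prop) : Prop :=
  forall e, 0 < e -> exists M, forall n, (M <= n)%nat ->
    (forall p, An n p -> exists q, A q /\ dist2 p q < e) /\
    (forall q, A q -> exists p, An n p /\ dist2 p q < e).

(** Equicontinuity of the (real-valued) geodesic metrics d_{G,n} on K_n x K_n. *)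
Definition geodist_equicont (Kn : nat -> pt -> Prop) : Prop :=
  forall e, 0 < e -> exists eta, 0 < eta /\
    forall n x y x' y', Kn n x -> Kn n y -> Kn n x' -> Kn n y' ->
      dist4 x y x' y' < eta ->
      exists a b, geodist (Kn n) x y = Finite a /\
                  geodist (Kn n) x' y' = Finite b /\ Rabs (a - b) <= e.

(* Let g be a curve in K from x to y of length L <= k^-m. It stays within k^-m of x, so it meets
   at most 16 level-m cells of K, and following g from cell to cell, leaving each one at its last
   exit time, yields a chain of at most 16 such cells joining x to y. The corresponding cells of
   K_n are copies of K_n scaled by k^-m, and for large n the K_n have diameter at most a constant
   D depending only on K: the boundary of the unit square lies in every K_n, and the first-level
   cells are linked to it through the connected adjacency graph of the first-level cells of K.
   Hausdorff convergence and equicontinuity glue consecutive cells with an arbitrarily small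
   error, so limsup d_{G,n}(x_n, y_n) <= 16 k^-m D <= 16 k D L, and C = 16 k D. *)

From Stdlib Require Import Reals Lra List Lia Arith.
From Stdlib Require Import Classical.
From Coquelicot Require Import Coquelicot.
Open Scope R_scope.

Lemma dist2_sym p q : dist2 p q = dist2 q p.
Proof. unfold dist2. f_equal. ring. Qed.

Lemma dist2_ge_0 p q : 0 <= dist2 p q.
Proof. apply sqrt_pos. Qed.

Lemma dist2_diag p : dist2 p p = 0.
Proof. unfold dist2. rewrite !Rminus_diag_eq by reflexivity. rewrite pow_i by lia. rewrite Rplus_0_r. apply sqrt_0. Qed.

Lemma dist2_triangle p q r : dist2 p r <= dist2 p q + dist2 q r.
Proof.
  destruct p as [a b], q as [c d], r as [e f].
  pose proof (Rgeom.triangle a b e f c d) as H. unfold Rgeom.dist_euc, Rsqr in H.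
  unfold dist2; simpl. rewrite !Rmult_1_r. exact H.
Qed.

Lemma Rabs_fst_le_dist2 p q : Rabs (fst p - fst q) <= dist2 p q.
Proof.
  unfold dist2. rewrite <- sqrt_Rsqr_abs. apply sqrt_le_1_alt.
  unfold Rsqr. pose proof (pow2_ge_0 (snd p - snd q)). simpl. lra.
Qed.

Lemma Rabs_snd_le_dist2 p q : Rabs (snd p - snd q) <= dist2 p q.
Proof.
  unfold dist2. rewrite <- sqrt_Rsqr_abs. apply sqrt_le_1_alt.
  unfold Rsqr. pose proof (pow2_ge_0 (fst p - fst q)). simpl. lra.
Qed.

Lemma dist2_le_Rabs_sum p q : dist2 p q <= Rabs (fst p - fst q) + Rabs (snd p - snd q).
Proof.
  unfold dist2.
  pose proof (Rabs_pos (fst p - fst q)); pose proof (Rabs_pos (snd p - snd q)).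
  rewrite <- (sqrt_pow2 (Rabs (fst p - fst q) + Rabs (snd p - snd q))) by lra.
  apply sqrt_le_1_alt.
  rewrite <- (pow2_abs (fst p - fst q)), <- (pow2_abs (snd p - snd q)).
  pose proof (Rmult_le_pos _ _ H H0). simpl. lra.
Qed.

Lemma sqrt_sum_sq_scale r x y : sqrt ((r * x) ^ 2 + (r * y) ^ 2) = Rabs r * sqrt (x ^ 2 + y ^ 2).
Proof.
  replace ((r * x) ^ 2 + (r * y) ^ 2) with (r ^ 2 * (x ^ 2 + y ^ 2)) by ring.
  rewrite sqrt_mult_alt by apply pow2_ge_0.
  rewrite <- (pow2_abs r), sqrt_pow2 by apply Rabs_pos. reflexivity.
Qed.

Lemma dist2_Psi k c p q : (0 < k)%nat -> dist2 (Psi k c p) (Psi k c q) = dist2 p q / INR k.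
Proof.
  intros Hk. assert (HK : 0 < INR k) by (apply lt_0_INR; lia).
  unfold dist2, Psi; cbn [fst snd].
  replace (fst p / INR k + fst c - (fst q / INR k + fst c)) with (/ INR k * (fst p - fst q))
    by (field; lra).
  replace (snd p / INR k + snd c - (snd q / INR k + snd c)) with (/ INR k * (snd p - snd q))
    by (field; lra).
  rewrite sqrt_sum_sq_scale, Rabs_right by (apply Rle_ge, Rlt_le, Rinv_0_lt_compat; lra).
  unfold Rdiv. ring.
Qed.

Lemma dist2_unit_square p q : unit_square p -> unit_square q -> dist2 p q <= 2.
Proof.
  intros [[? ?] [? ?]] [[? ?] [? ?]]. eapply Rle_trans. apply dist2_le_Rabs_sum.
  assert (Rabs (fst p - fst q) <= 1) by (apply Rabs_le; lra).
  assert (Rabs (snd p - snd q) <= 1) by (apply Rabs_le; lra). lra.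
Qed.

Lemma le_of_le_add_eps x y : (forall e, 0 < e -> x <= y + e) -> x <= y.
Proof. intros H. apply Rnot_lt_le. intros Hlt. specialize (H ((x - y) / 2)). lra. Qed.

Lemma Rbar_le_of_le_add_eps (X : Rbar) y :
  (forall e, 0 < e -> Rbar_le X (Finite (y + e))) -> Rbar_le X (Finite y).
Proof.
  intros H. destruct X as [x| |]; simpl in *; auto.
  - apply le_of_le_add_eps. exact H.
  - apply (H 1 Rlt_0_1).
Qed.

Definition partition (t : nat -> R) (m : nat) : Prop :=
  t O = 0 /\ t m = 1 /\ (forall j, (j < m)%nat -> t j < t (S j)).

Lemma poly_sum_le_curve_length g L t m :
  curve_length g = Finite L -> partition t m -> poly_sum g t m <= L.
Proof.
  intros HL Ht. unfold curve_length in HL.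
  destruct (Lub_Rbar_correct (fun s => exists (m : nat) (t : nat -> R),
    t O = 0 /\ t m = 1 /\ (forall j, (j < m)%nat -> t j < t (S j)) /\
    s = poly_sum g t m)) as [Hub _].
  rewrite HL in Hub. apply Hub. exists m, t. destruct Ht as (? & ? & ?). auto.
Qed.

Lemma curve_length_le g B :
  (forall t m, partition t m -> poly_sum g t m <= B) -> Rbar_le (curve_length g) (Finite B).
Proof.
  intros H. apply Lub_Rbar_correct. intros s (m & t & H0 & H1 & H2 & ->).
  apply H. repeat split; auto.
Qed.

Lemma poly_sum_ge_0 g t m : 0 <= poly_sum g t m.
Proof. induction m; simpl. lra. pose proof (dist2_ge_0 (g (t m)) (g (t (S m)))). lra. Qed.

Lemma poly_sum_add g t a b :
  poly_sum g t (a + b) = poly_sum g t a + poly_sum g (fun j => t (a + j)%nat) b.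
Proof.
  induction b; simpl. rewrite Nat.add_0_r. ring.
  rewrite Nat.add_succ_r. simpl. rewrite IHb. ring.
Qed.

Lemma poly_sum_ext g g' t t' m : (forall j, (j <= m)%nat -> g (t j) = g' (t' j)) ->
  poly_sum g t m = poly_sum g' t' m.
Proof.
  induction m; intros H; simpl. reflexivity.
  rewrite IHm by (intros; apply H; lia). rewrite (H m), (H (S m)) by lia. reflexivity.
Qed.

Lemma strict_incr_le (t : nat -> R) m : (forall j, (j < m)%nat -> t j < t (S j)) ->
  forall i j, (i <= j <= m)%nat -> t i <= t j.
Proof.
  intros H i j Hij. induction j.
  - replace i with O by lia. lra.
  - destruct (Nat.eq_dec i (S j)) as [->|]. lra.
    specialize (H j ltac:(lia)). specialize (IHj ltac:(lia)). lra.
Qed.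

Lemma partition_crossing (t : nat -> R) m a : t O <= a -> a < t m ->
  exists j, (j < m)%nat /\ t j <= a /\ a < t (S j).
Proof.
  induction m; intros H0 H1. lra.
  destruct (Rle_dec (t m) a).
  - exists m. repeat split; auto; lra.
  - destruct IHm as (j & ? & ? & ?); auto. lra. exists j. auto.
Qed.

Lemma poly_sum_head_le g L t j : curve_length g = Finite L -> t O = 0 ->
  (forall i, (i < j)%nat -> t i < t (S i)) -> t j <= 1 ->
  poly_sum g t j + dist2 (g (t j)) (g 1) <= L.
Proof.
  intros HL T0 Tinc Tj.
  destruct (Req_dec (t j) 1) as [E|Ne].
  - rewrite E, dist2_diag, Rplus_0_r. apply poly_sum_le_curve_length; auto. repeat split; auto.
  - set (u := fun i => if le_lt_dec i j then t i else 1).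
    assert (H : poly_sum g u (S j) <= L).
    { apply poly_sum_le_curve_length; auto. split; [|split].
      - unfold u; simpl. exact T0.
      - unfold u; destruct (le_lt_dec (S j) j); [lia|auto].
      - intros i Hi. unfold u. destruct (le_lt_dec i j), (le_lt_dec (S i) j); try lia.
        + apply Tinc; lia.
        + replace i with j by lia. lra. }
    simpl in H. unfold u at 2 3 in H.
    destruct (le_lt_dec j j), (le_lt_dec (S j) j); try lia.
    rewrite (poly_sum_ext g g u t j) in H; auto.
    intros i Hi. unfold u. destruct (le_lt_dec i j); auto; lia.
Qed.

Lemma poly_sum_tail_le g L t b : curve_length g = Finite L -> 0 <= t O ->
  (forall i, (i < b)%nat -> t i < t (S i)) -> t b = 1 ->
  dist2 (g 0) (g (t O)) + poly_sum g t b <= L.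
Proof.
  intros HL T0 Tinc Tb.
  set (v := fun i => match i with O => 0 | S i' => t i' end).
  destruct (Req_dec (t O) 0) as [E|Ne].
  - rewrite E, dist2_diag, Rplus_0_l. apply poly_sum_le_curve_length; auto. repeat split; auto.
  - assert (H : poly_sum g v (1 + b) <= L).
    { apply poly_sum_le_curve_length; auto. split; [|split]; auto.
      intros [|i] Hi; simpl; [lra|]. apply Tinc. lia. }
    rewrite poly_sum_add in H. simpl (poly_sum g v 1) in H.
    change (poly_sum g (fun j => v (1 + j)%nat) b) with (poly_sum g t b) in H. lra.
Qed.

Lemma dist2_le_curve_length g L s : curve_length g = Finite L -> 0 <= s <= 1 ->
  dist2 (g 0) (g s) <= L.
Proof.
  intros HL Hs. destruct (Req_dec s 1) as [->|Ne].
  - pose proof (poly_sum_tail_le g L (fun _ => 1) 0 HL ltac:(lra) ltac:(lia) eq_refl).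
    simpl in H. lra.
  - pose proof (poly_sum_tail_le g L (fun i => match i with O => s | _ => 1 end) 1 HL
      ltac:(simpl; lra) ltac:(intros [|] ?; [simpl; lra|lia]) eq_refl).
    simpl in H. pose proof (dist2_ge_0 (g s) (g 1)). lra.
Qed.

Lemma curve_length_ge_0 g L : curve_length g = Finite L -> 0 <= L.
Proof.
  intros HL. pose proof (dist2_le_curve_length g L 0 HL ltac:(lra)).
  rewrite dist2_diag in H. exact H.
Qed.

Lemma curve_length_ge_0_Rbar g : Rbar_le (Finite 0) (curve_length g).
Proof.
  set (t := fun j : nat => match j with O => 0 | _ => 1 end).
  apply (Rbar_le_trans _ (Finite (poly_sum g t 1))). apply poly_sum_ge_0.
  apply Lub_Rbar_correct. exists 1%nat, t. repeat split.
  intros j Hj. replace j with O by lia. unfold t. lra.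
Qed.

Definition curve_concat (g1 g2 : R -> pt) (t : R) : pt :=
  if Rle_dec t (1/2) then g1 (2 * t) else g2 (2 * t - 1).

Lemma curve_length_concat g1 g2 L1 L2 :
  curve_length g1 = Finite L1 -> curve_length g2 = Finite L2 -> g1 1 = g2 0 ->
  Rbar_le (curve_length (curve_concat g1 g2)) (Finite (L1 + L2)).
Proof.
  intros H1 H2 Hj. apply curve_length_le. intros t m (T0 & T1 & Tinc).
  destruct (partition_crossing t m (1/2)) as (j & Hjm & Htj & Htj1); [lra|lra|].
  assert (Hle : forall i i', (i <= i' <= m)%nat -> t i <= t i') by (apply strict_incr_le; auto).
  replace m with (j + (1 + (m - S j)))%nat by lia.
  rewrite poly_sum_add, (poly_sum_add _ _ 1). simpl (poly_sum _ _ 1).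
  rewrite Nat.add_0_r, Nat.add_1_r, Rplus_0_l.
  rewrite (poly_sum_ext _ g1 t (fun i => 2 * t i) j).
  2:{ intros i Hi. unfold curve_concat. destruct (Rle_dec (t i) (1/2)); auto.
      specialize (Hle i j ltac:(lia)). lra. }
  rewrite (poly_sum_ext _ g2 _ (fun i => 2 * t (S j + i)%nat - 1) (m - S j)).
  2:{ intros i Hi. unfold curve_concat. replace (j + (1 + i))%nat with (S j + i)%nat by lia.
      destruct (Rle_dec (t (S j + i)%nat) (1/2)); auto.
      specialize (Hle (S j) (S j + i)%nat ltac:(lia)). lra. }
  unfold curve_concat at 1 2.
  destruct (Rle_dec (t j) (1/2)), (Rle_dec (t (S j)) (1/2)); try lra.
  pose proof (dist2_triangle (g1 (2 * t j)) (g1 1) (g2 (2 * t (S j) - 1))) as Tri.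
  rewrite Hj in Tri at 2.
  assert (A := poly_sum_head_le g1 L1 (fun i => 2 * t i) j H1).
  assert (B := poly_sum_tail_le g2 L2 (fun i => 2 * t (S j + i)%nat - 1) (m - S j) H2).
  cbv beta in A, B. rewrite Nat.add_0_r in B.
  replace (S j + (m - S j))%nat with m in B by lia.
  specialize (A ltac:(rewrite T0; ring) ltac:(intros i Hi; specialize (Tinc i ltac:(lia)); lra)
    ltac:(lra)).
  specialize (B ltac:(lra) ltac:(intros i Hi; replace (S j + S i)%nat with (S (S j + i)) by lia;
    specialize (Tinc (S j + i)%nat ltac:(lia)); lra) ltac:(rewrite T1; ring)).
  lra.
Qed.

Lemma curve_in_concat A x y z g1 g2 : curve_in A x y g1 -> curve_in A y z g2 ->
  curve_in A x z (curve_concat g1 g2).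
Proof.
  intros (G10 & G11 & G1A & G1c) (G20 & G21 & G2A & G2c).
  unfold curve_concat. split; [|split; [|split]].
  - destruct (Rle_dec 0 (1/2)); [|lra]. rewrite Rmult_0_r. auto.
  - destruct (Rle_dec 1 (1/2)); [lra|]. replace (2 * 1 - 1) with 1 by ring. auto.
  - intros t Ht. destruct (Rle_dec t (1/2)); [apply G1A | apply G2A]; lra.
  - intros t Ht e He.
    destruct (Rlt_le_dec t (1/2)) as [Hlt|Hge]; [|destruct (Req_dec t (1/2)) as [->|Ne]].
    + destruct (G1c (2 * t) ltac:(lra) e He) as (d & Hd & Hc).
      exists (Rmin (d / 2) (1/2 - t)). split. apply Rmin_pos; lra.
      intros s Hs Hst. pose proof (Rmin_l (d / 2) (1/2 - t)). pose proof (Rmin_r (d / 2) (1/2 - t)).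
      apply Rabs_def2 in Hst.
      destruct (Rle_dec s (1/2)), (Rle_dec t (1/2)); try lra.
      apply Hc. lra. apply Rabs_def1; lra.
    + destruct (G1c 1 ltac:(lra) e He) as (d1 & Hd1 & Hc1).
      destruct (G2c 0 ltac:(lra) e He) as (d2 & Hd2 & Hc2).
      exists (Rmin d1 d2 / 2). split. pose proof (Rmin_glb_lt _ _ _ Hd1 Hd2). lra.
      intros s Hs Hst. pose proof (Rmin_l d1 d2). pose proof (Rmin_r d1 d2).
      apply Rabs_def2 in Hst.
      destruct (Rle_dec (1/2) (1/2)); [|lra]. replace (2 * (1/2)) with 1 by field.
      destruct (Rle_dec s (1/2)).
      * apply Hc1. lra. apply Rabs_def1; lra.
      * rewrite G11, <- G20. apply Hc2. lra. apply Rabs_def1; lra.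
    + destruct (G2c (2 * t - 1) ltac:(lra) e He) as (d & Hd & Hc).
      exists (Rmin (d / 2) (t - 1/2)). split. apply Rmin_pos; lra.
      intros s Hs Hst. pose proof (Rmin_l (d / 2) (t - 1/2)). pose proof (Rmin_r (d / 2) (t - 1/2)).
      apply Rabs_def2 in Hst.
      destruct (Rle_dec s (1/2)), (Rle_dec t (1/2)); try lra.
      apply Hc. lra. apply Rabs_def1; lra.
Qed.

Definition curve_rev (g : R -> pt) (t : R) : pt := g (1 - t).

Lemma poly_sum_rev g t m : poly_sum g t m = poly_sum g (fun j => t (m - j)%nat) m.
Proof.
  revert t. induction m; intros t. reflexivity.
  change (poly_sum g (fun j => t (S m - j)%nat) (S m))
    with (poly_sum g (fun j => t (S m - j)%nat) (1 + m)).
  rewrite poly_sum_add. simpl. rewrite IHm, Nat.sub_0_r, dist2_sym. ring.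
Qed.

Lemma curve_length_rev g L : curve_length g = Finite L ->
  Rbar_le (curve_length (curve_rev g)) (Finite L).
Proof.
  intros HL. apply curve_length_le. intros t m (T0 & T1 & Tinc).
  rewrite (poly_sum_ext _ g _ (fun j => 1 - t j) m) by reflexivity.
  rewrite poly_sum_rev. apply poly_sum_le_curve_length; auto. split; [|split].
  - simpl. rewrite Nat.sub_0_r, T1. ring.
  - rewrite Nat.sub_diag, T0. ring.
  - intros j Hj. replace (m - j)%nat with (S (m - S j)) by lia.
    specialize (Tinc (m - S j)%nat ltac:(lia)). lra.
Qed.

Lemma curve_in_rev A p q g : curve_in A p q g -> curve_in A q p (curve_rev g).
Proof.
  intros (G0 & G1 & GA & Gc). unfold curve_rev. split; [|split; [|split]].
  - rewrite Rminus_0_r. auto.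
  - rewrite Rminus_diag_eq by auto. auto.
  - intros t Ht. apply GA. lra.
  - intros t Ht e He. destruct (Gc (1 - t) ltac:(lra) e He) as (d & Hd & H).
    exists d. split; auto. intros s Hs Hst. apply H. lra.
    replace (1 - s - (1 - t)) with (- (s - t)) by ring. rewrite Rabs_Ropp. auto.
Qed.

Lemma curve_length_Psi k c g L : (1 <= k)%nat -> curve_length g = Finite L ->
  Rbar_le (curve_length (fun s => Psi k c (g s))) (Finite (L / INR k)).
Proof.
  intros Hk HL. assert (0 < INR k) by (apply lt_0_INR; lia).
  apply curve_length_le. intros t m Ht.
  assert (E : forall m', poly_sum (fun s => Psi k c (g s)) t m' = poly_sum g t m' / INR k).
  { induction m'; simpl. field; lra. rewrite IHm', dist2_Psi by lia. field; lra. }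
  rewrite E. apply Rmult_le_compat_r. left; apply Rinv_0_lt_compat; lra.
  apply poly_sum_le_curve_length; auto.
Qed.

Lemma curve_in_Psi A k c p q g : (1 <= k)%nat -> (forall z, A z -> A (Psi k c z)) ->
  curve_in A p q g -> curve_in A (Psi k c p) (Psi k c q) (fun s => Psi k c (g s)).
Proof.
  intros Hk HA (G0 & G1 & GA & Gc). assert (1 <= INR k) by (apply (le_INR 1); lia).
  split; [rewrite G0; auto|split; [rewrite G1; auto|split]]; auto.
  intros t Ht e He. destruct (Gc t Ht e He) as (d & Hd & Hc). exists d. split; auto.
  intros s Hs Hst. rewrite dist2_Psi by lia. specialize (Hc s Hs Hst).
  pose proof (dist2_ge_0 (g s) (g t)).
  apply (Rle_lt_trans _ (dist2 (g s) (g t))); auto.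
  apply Rcomplements.Rle_div_l; [lra|]. rewrite <- (Rmult_1_r (dist2 _ _)) at 1.
  apply Rmult_le_compat_l; lra.
Qed.

Definition const_curve (p : pt) : R -> pt := fun _ => p.

Lemma curve_in_const A p : A p -> curve_in A p p (const_curve p).
Proof.
  intros Hp. repeat split; auto. intros t Ht e He. exists 1. split. lra.
  intros. unfold const_curve. rewrite dist2_diag. auto.
Qed.

Lemma curve_length_const p : Rbar_le (curve_length (const_curve p)) (Finite 0).
Proof.
  apply curve_length_le. intros t m _. induction m; simpl. lra.
  unfold const_curve at 2 3. rewrite dist2_diag. lra.
Qed.

Definition seg (a b : pt) (t : R) : pt :=
  (fst a + t * (fst b - fst a), snd a + t * (snd b - snd a)).

Lemma dist2_seg a b s t : dist2 (seg a b s) (seg a b t) = Rabs (s - t) * dist2 a b.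
Proof.
  unfold dist2, seg; cbn [fst snd].
  replace (fst a + s * (fst b - fst a) - (fst a + t * (fst b - fst a)))
    with ((s - t) * (fst b - fst a)) by ring.
  replace (snd a + s * (snd b - snd a) - (snd a + t * (snd b - snd a)))
    with ((s - t) * (snd b - snd a)) by ring.
  rewrite sqrt_sum_sq_scale. f_equal. f_equal. f_equal; ring.
Qed.

Lemma curve_in_seg A a b : (forall t, 0 <= t <= 1 -> A (seg a b t)) -> curve_in A a b (seg a b).
Proof.
  intros HA. split; [|split; [|split]]; auto.
  - unfold seg. destruct a; simpl. f_equal; ring.
  - unfold seg. destruct a, b; simpl. f_equal; ring.
  - intros t Ht e He. pose proof (dist2_ge_0 a b).
    exists (e / (dist2 a b + 1)). split. apply Rdiv_lt_0_compat; lra.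
    intros s Hs Hst. rewrite dist2_seg.
    apply (Rle_lt_trans _ (Rabs (s - t) * (dist2 a b + 1))).
    { apply Rmult_le_compat_l. apply Rabs_pos. lra. }
    apply Rcomplements.Rlt_div_r in Hst; lra.
Qed.

Lemma curve_length_seg a b : Rbar_le (curve_length (seg a b)) (Finite (dist2 a b)).
Proof.
  apply curve_length_le. intros t m (T0 & T1 & Tinc).
  assert (E : forall j, (j <= m)%nat -> poly_sum (seg a b) t j = (t j - t O) * dist2 a b).
  { induction j; intros Hj; simpl. ring. rewrite IHj, dist2_seg by lia.
    specialize (Tinc j ltac:(lia)). rewrite Rabs_left by lra. ring. }
  rewrite E, T0, T1 by lia. lra.
Qed.

Lemma geodist_le_curve A p q g B : curve_in A p q g ->
  Rbar_le (curve_length g) (Finite B) -> Rbar_le (geodist A p q) (Finite B).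
Proof.
  intros Hc HB. pose proof (curve_length_ge_0_Rbar g) as H0.
  destruct (curve_length g) as [L| |] eqn:HL; simpl in HB, H0; try contradiction.
  apply (Rbar_le_trans _ (Finite L)); auto.
  apply Glb_Rbar_correct. exists g. auto.
Qed.

Lemma geodist_ge_0 A p q : Rbar_le (Finite 0) (geodist A p q).
Proof.
  apply Glb_Rbar_correct. intros L (g & _ & HL). eapply curve_length_ge_0; eauto.
Qed.

Lemma geodist_approx A p q a e : geodist A p q = Finite a -> 0 < e ->
  exists g L, curve_in A p q g /\ curve_length g = Finite L /\ L < a + e.
Proof.
  intros Ha He. apply NNPP. intros Hn.
  assert (H : Rbar_le (Finite (a + e)) (geodist A p q)).
  { apply Glb_Rbar_correct. intros L (g & Hc & HL). simpl.
    apply Rnot_lt_le. intros HL'. apply Hn. exists g, L. auto. }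
  rewrite Ha in H. simpl in H. lra.
Qed.

Lemma geodist_diag A p : A p -> geodist A p p = Finite 0.
Proof.
  intros Hp. apply Rbar_le_antisym; [|apply geodist_ge_0].
  apply (geodist_le_curve A p p (const_curve p)).
  apply curve_in_const; auto. apply curve_length_const.
Qed.

Lemma geodist_sym A p q : geodist A p q = geodist A q p.
Proof.
  assert (H : forall p q, Rbar_le (geodist A p q) (geodist A q p)).
  { clear. intros p q. apply Glb_Rbar_correct. intros L (g & Hc & HL).
    apply (geodist_le_curve A p q (curve_rev g)).
    apply curve_in_rev; auto. apply curve_length_rev; auto. }
  apply Rbar_le_antisym; apply H.
Qed.

Lemma geodist_triangle A p q r a b : geodist A p q = Finite a -> geodist A q r = Finite b ->
  Rbar_le (geodist A p r) (Finite (a + b)).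
Proof.
  intros Ha Hb. apply Rbar_le_of_le_add_eps. intros e He.
  destruct (geodist_approx A p q a (e / 2) Ha) as (g1 & L1 & C1 & E1 & H1); [lra|].
  destruct (geodist_approx A q r b (e / 2) Hb) as (g2 & L2 & C2 & E2 & H2); [lra|].
  apply (geodist_le_curve A p r (curve_concat g1 g2)). eapply curve_in_concat; eauto.
  eapply Rbar_le_trans. apply curve_length_concat; eauto.
  - destruct C1 as (_ & -> & _), C2 as (-> & _). reflexivity.
  - simpl. lra.
Qed.

Lemma geodist_Psi_le A k c p q a : (1 <= k)%nat -> (forall z, A z -> A (Psi k c z)) ->
  geodist A p q = Finite a -> Rbar_le (geodist A (Psi k c p) (Psi k c q)) (Finite (a / INR k)).
Proof.
  intros Hk HA Ha. assert (1 <= INR k) by (apply (le_INR 1); lia).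
  apply Rbar_le_of_le_add_eps. intros e He.
  destruct (geodist_approx A p q a e Ha He) as (g & L & Hc & HL & HLt).
  apply (geodist_le_curve A _ _ (fun s => Psi k c (g s))). apply curve_in_Psi; auto.
  eapply Rbar_le_trans. apply curve_length_Psi; eauto. simpl.
  apply (Rle_trans _ ((a + e) / INR k)).
  - apply Rmult_le_compat_r. left; apply Rinv_0_lt_compat; lra. lra.
  - rewrite Rdiv_plus_distr. apply Rplus_le_compat_l.
    apply Rcomplements.Rle_div_l; [lra|]. rewrite <- (Rmult_1_r e) at 1.
    apply Rmult_le_compat_l; lra.
Qed.

Lemma geodist_le_dist2 A a b : (forall t, 0 <= t <= 1 -> A (seg a b t)) ->
  Rbar_le (geodist A a b) (Finite (dist2 a b)).
Proof.
  intros HA. apply (geodist_le_curve A a b (seg a b)).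
  apply curve_in_seg; auto. apply curve_length_seg.
Qed.

Lemma Rbar_le_mult_geodist A x y (X : Rbar) C : 0 < C ->
  (forall g L, curve_in A x y g -> curve_length g = Finite L -> Rbar_le X (Finite (C * L))) ->
  Rbar_le X (Rbar_mult (Finite C) (geodist A x y)).
Proof.
  intros HC H. pose proof (geodist_ge_0 A x y) as H0.
  destruct (geodist A x y) as [a| |] eqn:E; simpl in H0 |- *; try contradiction.
  - apply Rbar_le_of_le_add_eps. intros e He.
    destruct (geodist_approx A x y a (e / C) E) as (g & L & Hc & HL & HLt).
    apply Rdiv_lt_0_compat; auto.
    eapply Rbar_le_trans. apply (H g L Hc HL). simpl.
    apply Rmult_lt_compat_l with (r := C) in HLt; auto.
    rewrite Rmult_plus_distr_l in HLt. unfold Rdiv in HLt.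
    rewrite <- Rmult_assoc, (Rmult_comm C e), Rmult_assoc, Rinv_r, Rmult_1_r in HLt; lra.
  - destruct (Rle_dec 0 C) as [H1|]; [destruct (Rle_lt_or_eq_dec 0 C H1)|]; try lra.
    destruct X; simpl; auto.
Qed.

Definition grid_index (s t : R) : nat :=
  if Rlt_dec t s then 0 else if Rlt_dec t (2 * s) then 1 else if Rlt_dec t (3 * s) then 2 else 3.

Lemma grid_index_lt s t : (grid_index s t < 4)%nat.
Proof. unfold grid_index. repeat destruct Rlt_dec; lia. Qed.

Lemma grid_index_eq s t t' : 0 < s -> 0 <= t <= 3 * s -> 0 <= t' <= 3 * s ->
  grid_index s t = grid_index s t' -> Rabs (t - t') < s.
Proof.
  intros Hs Ht Ht' E. unfold grid_index in E.
  apply Rabs_def1; repeat destruct Rlt_dec; try discriminate; lra.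
Qed.

(* Points of a 3s x 3s box that are pairwise s-apart in some coordinate fall into distinct
   cells of a 4 x 4 grid. *)
Lemma separated_in_box_length_le_16 {A : Type} (l : list A) (p : A -> pt) x0 y0 s :
  0 < s -> NoDup l ->
  (forall a, In a l -> x0 <= fst (p a) <= x0 + 3 * s /\ y0 <= snd (p a) <= y0 + 3 * s) ->
  (forall a b, In a l -> In b l -> a <> b ->
     s <= Rabs (fst (p a) - fst (p b)) \/ s <= Rabs (snd (p a) - snd (p b))) ->
  (length l <= 16)%nat.
Proof.
  intros Hs Hnd Hbox Hsep.
  set (gx a := grid_index s (fst (p a) - x0)). set (gy a := grid_index s (snd (p a) - y0)).
  set (f a := (4 * gx a + gy a)%nat).
  assert (Hnd' : NoDup (map f l)).
  { apply NoDup_map_NoDup_ForallPairs; auto.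
    intros a b Ha Hb Ef. apply NNPP. intros Hne.
    pose proof (grid_index_lt s (fst (p a) - x0)). pose proof (grid_index_lt s (snd (p a) - y0)).
    pose proof (grid_index_lt s (fst (p b) - x0)). pose proof (grid_index_lt s (snd (p b) - y0)).
    assert (Ex : gx a = gx b) by (unfold f, gx, gy in *; lia).
    assert (Ey : gy a = gy b) by (unfold f, gx, gy in *; lia).
    pose proof (Hbox a Ha). pose proof (Hbox b Hb).
    apply grid_index_eq in Ex; [|lra|lra|lra]. apply grid_index_eq in Ey; [|lra|lra|lra].
    replace (fst (p a) - x0 - (fst (p b) - x0)) with (fst (p a) - fst (p b)) in Ex by ring.
    replace (snd (p a) - y0 - (snd (p b) - y0)) with (snd (p a) - snd (p b)) in Ey by ring.
    destruct (Hsep a b Ha Hb Hne); lra. }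
  rewrite <- (length_map f l). change 16%nat with (length (seq 0 16)).
  apply NoDup_incl_length; auto.
  intros n Hn. apply in_map_iff in Hn. destruct Hn as (a & <- & _). apply in_seq.
  unfold f, gx, gy. pose proof (grid_index_lt s (fst (p a) - x0)).
  pose proof (grid_index_lt s (snd (p a) - y0)). lia.
Qed.

Lemma finite_min_pos {A : Type} (P : A -> R -> Prop) (l : list A) :
  (forall a e e', 0 < e' <= e -> P a e -> P a e') ->
  (forall a, In a l -> exists e, 0 < e /\ P a e) ->
  exists e, 0 < e /\ forall a, In a l -> P a e.
Proof.
  intros Hmono. induction l as [|a l IH]; intros H.
  - exists 1. split. lra. intros a [].
  - destruct (H a (or_introl eq_refl)) as (e1 & He1 & Ha).
    destruct IH as (e2 & He2 & Hl). intros; apply H; right; auto.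
    exists (Rmin e1 e2). pose proof (Rmin_glb_lt _ _ _ He1 He2).
    pose proof (Rmin_l e1 e2). pose proof (Rmin_r e1 e2).
    split; auto. intros b [<-|Hb]; [apply (Hmono a e1)|apply (Hmono b e2)]; auto; lra.
Qed.

Lemma bounded_choice_nat (N : nat) (Q : nat -> nat -> Prop) :
  (forall j, (j < N)%nat -> exists h, Q j h) ->
  exists H, forall j, (j < N)%nat -> exists h, (h <= H)%nat /\ Q j h.
Proof.
  induction N as [|N IH]; intros HQ.
  - exists O. intros; lia.
  - destruct IH as [H1 HH1]. intros; apply HQ; lia.
    destruct (HQ N ltac:(lia)) as [h2 Hh2].
    exists (max H1 h2). intros j Hj. destruct (Nat.eq_dec j N) as [->|Hne].
    + exists h2. split; auto. lia.
    + destruct (HH1 j ltac:(lia)) as (h & ? & ?). exists h. split; auto. lia.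
Qed.

Lemma eventually_forall_lt (N : nat) (P : nat -> nat -> Prop) :
  (forall i, (i < N)%nat -> eventually (P i)) -> eventually (fun n => forall i, (i < N)%nat -> P i n).
Proof.
  induction N as [|N IH]; intros H.
  - exists O. intros; lia.
  - destruct (IH ltac:(intros; apply H; lia)) as [n1 H1].
    destruct (H N ltac:(lia)) as [n2 H2].
    exists (max n1 n2). intros n Hn i Hi. destruct (Nat.eq_dec i N) as [->|Hne].
    + apply H2. lia.
    + apply H1; lia.
Qed.

Lemma pt_conv_const p : pt_conv (fun _ => p) p.
Proof. intros e He. exists O. intros. rewrite dist2_diag. exact He. Qed.

Lemma LimSup_le_eventually (u : nat -> R) B : eventually (fun n => u n <= B) ->
  Rbar_le (LimSup_seq u) (Finite B).
Proof. intros H. rewrite <- (LimSup_seq_const B). apply LimSup_le. exact H. Qed.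

Lemma eventually_and (P Q : nat -> Prop) :
  eventually P -> eventually Q -> eventually (fun n => P n /\ Q n).
Proof. apply filter_and. Qed.

(** * Words and the cells they address *)

Fixpoint Psi_word (k : nat) (c : nat -> pt) (w : list nat) (z : pt) : pt :=
  match w with nil => z | i :: w' => Psi k (c i) (Psi_word k c w' z) end.

Definition cell_size (k m : nat) : R := (/ INR k) ^ m.

Fixpoint words (N m : nat) : list (list nat) :=
  match m with
  | O => nil :: nil
  | S m' => flat_map (fun i => map (cons i) (words N m')) (seq 0 N)
  end.

Lemma in_words N m w : In w (words N m) <-> length w = m /\ List.Forall (fun i => (i < N)%nat) w.
Proof.
  revert w. induction m as [|m IH]; intros w; simpl.
  - split. intros [<-|[]]. auto. intros [Hl _]. destruct w; simpl in Hl; auto; lia.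
  - rewrite in_flat_map. split.
    + intros (i & Hi & Hw). apply in_map_iff in Hw. destruct Hw as (w' & <- & Hw').
      apply IH in Hw'. apply in_seq in Hi. destruct Hw'. simpl. split; auto. constructor; auto. lia.
    + intros [Hl Hok]. destruct w as [|i w']. simpl in Hl; lia.
      inversion Hok; subst. exists i. split. apply in_seq. lia.
      apply in_map. apply IH. simpl in Hl. auto.
Qed.

Section CellSize.
Variable k : nat.
Hypothesis Hk : (2 <= k)%nat.

Let INR_k_ge_2 : 2 <= INR k.
Proof. replace 2 with (INR 2) by (simpl; lra). apply le_INR, Hk. Qed.

Lemma cell_size_pos m : 0 < cell_size k m.
Proof. apply pow_lt, Rinv_0_lt_compat. lra. Qed.

Lemma cell_size_S m : cell_size k (S m) = cell_size k m / INR k.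
Proof. unfold cell_size, Rdiv. simpl. ring. Qed.

Lemma cell_size_le_1 m : cell_size k m <= 1.
Proof.
  induction m as [|m IH]. unfold cell_size; simpl; lra.
  rewrite cell_size_S. apply Rcomplements.Rle_div_l; lra.
Qed.

Lemma cell_size_small e : 0 < e -> exists m, cell_size k m < e.
Proof.
  intros He. destruct (pow_lt_1_zero (/ INR k)) with (y := e) as [M HM]; auto.
  - rewrite Rabs_right by (left; apply Rinv_0_lt_compat; lra).
    apply (Rmult_lt_reg_l (INR k)); [lra|]. rewrite Rinv_r; lra.
  - exists M. specialize (HM M (le_n _)).
    rewrite Rabs_right in HM; [exact HM|]. left; apply cell_size_pos.
Qed.

Lemma cell_size_level L : 0 < L -> L <= 1 ->
  exists m, cell_size k (S m) < L /\ L <= cell_size k m.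
Proof.
  intros HL HL1. destruct (cell_size_small L HL) as [M HM].
  induction M as [|M IH]. unfold cell_size in HM; simpl in HM; lra.
  destruct (Rlt_dec (cell_size k M) L) as [Hl|Hl]. apply IH; auto.
  exists M. split; auto. lra.
Qed.

Lemma Psi_word_affine c w z : Psi_word k c w z =
  (fst (Psi_word k c w (0, 0)) + cell_size k (length w) * fst z,
   snd (Psi_word k c w (0, 0)) + cell_size k (length w) * snd z).
Proof.
  induction w as [|i w IH]; simpl.
  - unfold cell_size. destruct z. simpl. f_equal; ring.
  - rewrite IH. unfold Psi. cbn [fst snd]. rewrite cell_size_S. f_equal; field; lra.
Qed.

Lemma dist2_Psi_word c w p q :
  dist2 (Psi_word k c w p) (Psi_word k c w q) = cell_size k (length w) * dist2 p q.
Proof.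
  induction w as [|i w IH]; simpl.
  - unfold cell_size; simpl; ring.
  - rewrite dist2_Psi, IH, cell_size_S by lia. unfold Rdiv. ring.
Qed.

End CellSize.

(** * Geometry of an unconstrained Sierpinski carpet *)

Definition square_boundary (p : pt) : Prop :=
  unit_square p /\ (fst p = 0 \/ fst p = 1 \/ snd p = 0 \/ snd p = 1).

Lemma unit_square_origin : unit_square (0, 0).
Proof. unfold unit_square; simpl; lra. Qed.

Lemma square_boundary_origin : square_boundary (0, 0).
Proof. split. apply unit_square_origin. simpl; auto. Qed.

Section Carpet.
Variables (k N : nat) (c : nat -> pt) (K : pt -> Prop).
Hypothesis HU : is_USC k N c K.

Lemma USC_k_ge_3 : (3 <= k)%nat.
Proof. apply HU. Qed.

Let Hk : (2 <= k)%nat.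
Proof. pose proof USC_k_ge_3. lia. Qed.

Lemma INR_k_ge_3 : 3 <= INR k.
Proof. replace 3 with (INR 3) by (simpl; lra). apply le_INR, USC_k_ge_3. Qed.

Let Hk3 := INR_k_ge_3.

Lemma USC_cells_meet i j : (i < N)%nat -> (j < N)%nat -> i <> j ->
  seg_point_or_empty (fun p => cell k c i p /\ cell k c j p).
Proof. apply HU. Qed.

Lemma USC_connected : connected2 (first_level k N c).
Proof. apply HU. Qed.

Lemma USC_D4 g p : In g D4 -> first_level k N c p -> first_level k N c (g p).
Proof.
  intros Hg Hp. destruct HU as (_ & _ & _ & _ & _ & HD4 & _). apply (HD4 g Hg). exists p. auto.
Qed.

Lemma USC_bottom_edge x : 0 <= x <= 1 -> first_level k N c (x, 0).
Proof. apply HU. Qed.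

Lemma USC_first_level_square p : first_level k N c p -> unit_square p.
Proof. apply HU. Qed.

Lemma USC_nonempty : exists p, K p.
Proof. apply HU. Qed.

Lemma USC_closed : closed2 K.
Proof. apply HU. Qed.

Lemma USC_bounded : bounded2 K.
Proof. apply HU. Qed.

Lemma USC_Psi_K i z : (i < N)%nat -> K z -> K (Psi k (c i) z).
Proof.
  intros Hi Hz. destruct HU as (_ & _ & _ & _ & _ & _ & _ & _ & _ & _ & _ & HK).
  apply HK. exists i. split; auto. exists z. auto.
Qed.

Lemma USC_K_Psi p : K p -> exists i z, (i < N)%nat /\ K z /\ p = Psi k (c i) z.
Proof.
  intros Hp. destruct HU as (_ & _ & _ & _ & _ & _ & _ & _ & _ & _ & _ & HK).
  apply HK in Hp. destruct Hp as (i & Hi & z & Hz & ->). eauto.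
Qed.

Lemma cell_unit_square i u : (i < N)%nat -> unit_square u -> unit_square (Psi k (c i) u).
Proof. intros Hi Hu. apply USC_first_level_square. exists i. split; auto. exists u. auto. Qed.

Lemma offset_bounds i : (i < N)%nat ->
  0 <= fst (c i) /\ fst (c i) + / INR k <= 1 /\ 0 <= snd (c i) /\ snd (c i) + / INR k <= 1.
Proof.
  intros Hi.
  assert (H0 := cell_unit_square i (0, 0) Hi unit_square_origin).
  assert (H1 := cell_unit_square i (1, 1) Hi ltac:(unfold unit_square; simpl; lra)).
  unfold unit_square, Psi, Rdiv in *; simpl in *.
  rewrite Rmult_0_l, Rplus_0_l in H0. rewrite Rmult_1_l in H1. lra.
Qed.

Lemma Psi_word_K w z : List.Forall (fun i => (i < N)%nat) w -> K z -> K (Psi_word k c w z).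
Proof. intros Hw Hz. induction Hw; simpl; auto. apply USC_Psi_K; auto. Qed.

Lemma Psi_word_unit_square w z : List.Forall (fun i => (i < N)%nat) w -> unit_square z ->
  unit_square (Psi_word k c w z).
Proof. intros Hw Hz. induction Hw; simpl; auto. apply cell_unit_square; auto. Qed.

Lemma K_level_decomp m p : K p ->
  exists w z, In w (words N m) /\ K z /\ p = Psi_word k c w z.
Proof.
  revert p. induction m as [|m IH]; intros p Hp.
  - exists nil, p. simpl. auto.
  - destruct (USC_K_Psi p Hp) as (i & z & Hi & Hz & ->).
    destruct (IH z Hz) as (w & z' & Hw & Hz' & ->).
    exists (i :: w), z'. split; auto. apply in_words in Hw. apply in_words.
    simpl. destruct Hw. auto.
Qed.

Lemma Psi_word_origin_bounds w : List.Forall (fun i => (i < N)%nat) w ->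
  let o := Psi_word k c w (0, 0) in let r := cell_size k (length w) in
  0 <= fst o /\ fst o + r <= 1 /\ 0 <= snd o /\ snd o + r <= 1.
Proof.
  intros Hw o r. unfold o, r. pose proof (Psi_word_unit_square w (0, 0) Hw unit_square_origin).
  pose proof (Psi_word_unit_square w (1, 1) Hw ltac:(unfold unit_square; simpl; lra)) as H1.
  rewrite (Psi_word_affine k Hk c w (1, 1)) in H1. unfold unit_square in *. simpl in *. lra.
Qed.

Lemma K_near_unit_square M m p : (forall z, K z -> dist2 z (0, 0) <= M) -> K p ->
  - (cell_size k m * M) <= fst p <= 1 + cell_size k m * M /\
  - (cell_size k m * M) <= snd p <= 1 + cell_size k m * M.
Proof.
  intros HM Hp. destruct (K_level_decomp m p Hp) as (w & z & Hw & Hz & ->).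
  apply in_words in Hw. destruct Hw as [Hl Hw].
  pose proof (Psi_word_origin_bounds w Hw) as B. simpl in B.
  rewrite (Psi_word_affine k Hk c w z), Hl in *. simpl.
  specialize (HM z Hz). pose proof (cell_size_pos k Hk m).
  pose proof (Rle_trans _ _ _ (Rabs_fst_le_dist2 z (0, 0)) HM) as H1.
  pose proof (Rle_trans _ _ _ (Rabs_snd_le_dist2 z (0, 0)) HM) as H2.
  simpl in H1, H2. rewrite Rminus_0_r in H1, H2.
  apply Rabs_le_between in H1. apply Rabs_le_between in H2.
  set (r := cell_size k m) in *.
  assert (r * fst z <= r * M /\ - (r * M) <= r * fst z) as [? ?].
  { split; [|rewrite Ropp_mult_distr_r]; apply Rmult_le_compat_l; lra. }
  assert (r * snd z <= r * M /\ - (r * M) <= r * snd z) as [? ?].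
  { split; [|rewrite Ropp_mult_distr_r]; apply Rmult_le_compat_l; lra. }
  lra.
Qed.

Lemma K_sub_unit_square p : K p -> unit_square p.
Proof.
  intros Hp. destruct USC_bounded as [M HM].
  assert (HM0 : 0 <= M) by (specialize (HM p Hp); pose proof (dist2_ge_0 p (0, 0)); lra).
  assert (Hsmall : forall e, 0 < e -> exists m, cell_size k m * M < e).
  { intros e He. destruct (cell_size_small k Hk (e / (M + 1))) as [m Hm].
    apply Rdiv_lt_0_compat; lra. exists m. pose proof (cell_size_pos k Hk m).
    apply (Rle_lt_trans _ (cell_size k m * (M + 1))). apply Rmult_le_compat_l; lra.
    apply Rcomplements.Rlt_div_r in Hm; lra. }
  assert (Hnear : forall e, 0 < e ->
    - e <= fst p <= 1 + e /\ - e <= snd p <= 1 + e).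
  { intros e He. destruct (Hsmall e He) as [m Hm].
    pose proof (K_near_unit_square M m p HM Hp). lra. }
  repeat split; apply le_of_le_add_eps; intros e He; specialize (Hnear e He); lra.
Qed.

Lemma cell_of_box i p : fst (c i) <= fst p <= fst (c i) + / INR k ->
  snd (c i) <= snd p <= snd (c i) + / INR k -> cell k c i p.
Proof.
  intros H1 H2. exists ((fst p - fst (c i)) * INR k, (snd p - snd (c i)) * INR k). split.
  - assert (E : / INR k * INR k = 1) by (apply Rinv_l; lra).
    unfold unit_square; simpl. repeat split; try (apply Rmult_le_pos; lra);
    rewrite <- E; apply Rmult_le_compat_r; lra.
  - unfold Psi; simpl. destruct p; simpl. f_equal; field; lra.
Qed.

Lemma box_of_cell i p : cell k c i p ->
  fst (c i) <= fst p <= fst (c i) + / INR k /\ snd (c i) <= snd p <= snd (c i) + / INR k.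
Proof.
  intros (u & [[U1 U2] [V1 V2]] & ->). unfold Psi; simpl.
  assert (0 < / INR k) by (apply Rinv_0_lt_compat; lra).
  assert (0 <= fst u / INR k <= / INR k /\ 0 <= snd u / INR k <= / INR k) by
    (unfold Rdiv; repeat split; try (apply Rmult_le_pos; lra);
     rewrite <- (Rmult_1_l (/ INR k)) at 2; apply Rmult_le_compat_r; lra).
  lra.
Qed.

(* Two distinct cells overlapping in both coordinates would share a small square, which is
   neither empty, nor a point, nor contained in a segment. *)
Lemma offsets_separated i j : (i < N)%nat -> (j < N)%nat -> i <> j ->
  / INR k <= Rabs (fst (c i) - fst (c j)) \/ / INR k <= Rabs (snd (c i) - snd (c j)).
Proof.
  intros Hi Hj Hij. apply NNPP. intros Hn.
  apply not_or_and in Hn. destruct Hn as [Hn1 Hn2]. apply Rnot_le_lt in Hn1, Hn2.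
  set (s := / INR k) in *.
  set (h := Rmin (s - Rabs (fst (c i) - fst (c j))) (s - Rabs (snd (c i) - snd (c j)))).
  assert (Hh : 0 < h) by (apply Rmin_glb_lt; lra).
  assert (Hh1 : h <= s - Rabs (fst (c i) - fst (c j))) by apply Rmin_l.
  assert (Hh2 : h <= s - Rabs (snd (c i) - snd (c j))) by apply Rmin_r.
  clearbody h.
  set (M1 := Rmax (fst (c i)) (fst (c j))). set (M2 := Rmax (snd (c i)) (snd (c j))).
  assert (Hin : forall x y, M1 <= x <= M1 + h -> M2 <= y <= M2 + h ->
            cell k c i (x, y) /\ cell k c j (x, y)).
  { intros x y Hx Hy. unfold M1, M2, Rmax in *.
    destruct (Rle_dec (fst (c i)) (fst (c j))), (Rle_dec (snd (c i)) (snd (c j)));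
    revert Hx Hy; unfold Rabs in *;
    destruct (Rcase_abs (fst (c i) - fst (c j))), (Rcase_abs (snd (c i) - snd (c j)));
    intros; split; apply cell_of_box; simpl; fold s; lra. }
  assert (I0 := Hin M1 M2 ltac:(lra) ltac:(lra)).
  assert (I1 := Hin (M1 + h) M2 ltac:(lra) ltac:(lra)).
  assert (I2 := Hin M1 (M2 + h) ltac:(lra) ltac:(lra)).
  destruct (USC_cells_meet i j Hi Hj Hij) as [He|[[a Ha]|(a & b & Hs)]].
  - apply (He (M1, M2)). auto.
  - apply Ha in I0. apply Ha in I1. rewrite <- I1 in I0. injection I0. lra.
  - apply Hs in I0, I1, I2.
    destruct I0 as (t0 & _ & E0), I1 as (t1 & _ & E1), I2 as (t2 & _ & E2).
    injection E0 as E01 E02. injection E1 as E11 E12. injection E2 as E21 E22.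
    assert (A1 : (t1 - t0) * (fst b - fst a) = h) by lra.
    assert (A2 : (t1 - t0) * (snd b - snd a) = 0) by lra.
    assert (A3 : (t2 - t0) * (snd b - snd a) = h) by lra.
    apply Rmult_integral in A2. destruct A2 as [A2|A2]; rewrite A2 in *; lra.
Qed.

Lemma cells_meet_on_boundary i j z : (i < N)%nat -> (j < N)%nat -> i <> j ->
  cell k c i z -> cell k c j z -> exists u, square_boundary u /\ z = Psi k (c i) u.
Proof.
  intros Hi Hj Hij (u & Hu & Ez) (v & Hv & Ez').
  exists u. split; auto. split; auto.
  rewrite Ez in Ez'. unfold Psi in Ez'. injection Ez' as Z1 Z2.
  assert (Hk0 : INR k <> 0) by lra.
  assert (E1 : fst u - fst v = (fst (c j) - fst (c i)) * INR k).
  { apply (Rmult_eq_reg_r (/ INR k)); [|apply Rinv_neq_0_compat; lra].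
    field_simplify; auto. unfold Rdiv in Z1 |- *. lra. }
  assert (E2 : snd u - snd v = (snd (c j) - snd (c i)) * INR k).
  { apply (Rmult_eq_reg_r (/ INR k)); [|apply Rinv_neq_0_compat; lra].
    field_simplify; auto. unfold Rdiv in Z2 |- *. lra. }
  assert (Hscale : forall d, / INR k <= Rabs d -> 1 <= Rabs (d * INR k)).
  { intros d Hd. rewrite Rabs_mult, (Rabs_right (INR k)) by lra.
    rewrite <- (Rinv_l (INR k)) by lra. apply Rmult_le_compat_r; lra. }
  destruct Hu as [[U1 U1'] [U2 U2']], Hv as [[V1 V1'] [V2 V2']].
  destruct (offsets_separated i j Hi Hj Hij) as [S|S]; apply Hscale in S.
  - rewrite <- Rabs_Ropp, Ropp_mult_distr_l, Ropp_minus_distr, <- E1 in S.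
    unfold Rabs in S. destruct (Rcase_abs _) in S; lra.
  - rewrite <- Rabs_Ropp, Ropp_mult_distr_l, Ropp_minus_distr, <- E2 in S.
    unfold Rabs in S. destruct (Rcase_abs _) in S; lra.
Qed.

(* A part of the square that is covered by its own first-level images lies in K: its points
   are arbitrarily close to points of K at every level, and K is closed. *)
Lemma sub_self_similar_sub_K (E : pt -> Prop) : (forall p, E p -> unit_square p) ->
  (forall p, E p -> exists i u, (i < N)%nat /\ E u /\ p = Psi k (c i) u) ->
  forall p, E p -> K p.
Proof.
  intros Esq Edec p Hp.
  assert (Hlevel : forall m p, E p -> exists w u,
    List.Forall (fun i => (i < N)%nat) w /\ length w = m /\ E u /\ p = Psi_word k c w u).
  { induction m as [|m IH]; intros p0 Hp0.
    - exists nil, p0. auto.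
    - destruct (Edec p0 Hp0) as (i & u & Hi & Hu & ->).
      destruct (IH u Hu) as (w & u' & Hw & Hl & Hu' & ->).
      exists (i :: w), u'. simpl. auto. }
  destruct USC_nonempty as [z0 Hz0]. destruct USC_bounded as [M HM].
  pose proof (HM z0 Hz0) as HMz. pose proof (dist2_ge_0 z0 (0, 0)).
  apply USC_closed. intros e He.
  destruct (cell_size_small k Hk (e / (M + 3))) as [m Hm]. apply Rdiv_lt_0_compat; lra.
  destruct (Hlevel m p Hp) as (w & u & Hw & Hl & Hu & ->).
  exists (Psi_word k c w z0). split. apply Psi_word_K; auto.
  rewrite dist2_Psi_word, Hl by auto.
  assert (dist2 u z0 <= M + 2).
  { pose proof (dist2_triangle u (0, 0) z0). rewrite (dist2_sym (0, 0) z0) in H0.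
    pose proof (dist2_unit_square u (0, 0) (Esq u Hu) unit_square_origin). lra. }
  pose proof (cell_size_pos k Hk m).
  apply (Rle_lt_trans _ (cell_size k m * (M + 3))). apply Rmult_le_compat_l; lra.
  apply Rcomplements.Rlt_div_r in Hm; lra.
Qed.

Lemma edge_first_level (f : pt -> R) v : (f = fst \/ f = snd) -> (v = 0 \/ v = 1) ->
  forall p, unit_square p -> f p = v -> first_level k N c p.
Proof.
  intros Hf Hv [x y] Hp Hfp. unfold unit_square in Hp; simpl in Hp.
  destruct Hf as [-> | ->], Hv as [-> | ->]; simpl in Hfp; subst.
  - apply (USC_D4 (fun p => (snd p, fst p)) (y, 0)). simpl; tauto. apply USC_bottom_edge; lra.
  - replace (1, y) with ((fun p => (1 - snd p, fst p)) (y, 0)) by (simpl; f_equal; ring).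
    apply (USC_D4 (fun p => (1 - snd p, fst p))). simpl; tauto. apply USC_bottom_edge; lra.
  - apply USC_bottom_edge; lra.
  - replace (x, 1) with ((fun p => (fst p, 1 - snd p)) (x, 0)) by (simpl; f_equal; ring).
    apply (USC_D4 (fun p => (fst p, 1 - snd p))). simpl; tauto. apply USC_bottom_edge; lra.
Qed.

Lemma edge_sub_K (f : pt -> R) v : (f = fst \/ f = snd) -> (v = 0 \/ v = 1) ->
  forall p, unit_square p -> f p = v -> K p.
Proof.
  intros Hf Hv p Hp Hfp.
  apply (sub_self_similar_sub_K (fun p => unit_square p /\ f p = v)); [tauto| |auto].
  intros q [Hq Hfq]. destruct (edge_first_level f v Hf Hv q Hq Hfq) as (i & Hi & u & Hu & ->).
  exists i, u. split; [exact Hi|split; [split; [exact Hu|]|reflexivity]].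
  pose proof (offset_bounds i Hi) as B.
  assert (Hr : 0 < / INR k) by (apply Rinv_0_lt_compat; lra).
  assert (Hfu : 0 <= f u <= 1) by (destruct Hf as [-> | ->]; apply Hu).
  assert (Hfc : 0 <= f (c i) /\ f (c i) + / INR k <= 1) by (destruct Hf as [-> | ->]; lra).
  assert (HfPsi : f (Psi k (c i) u) = f u * / INR k + f (c i))
    by (destruct Hf as [-> | ->]; reflexivity).
  rewrite HfPsi in Hfq. set (x := f u) in *. set (a := f (c i)) in *. set (r := / INR k) in *.
  destruct Hv as [-> | ->]; apply Rle_antisym; nra.
Qed.

Lemma square_boundary_sub_K p : square_boundary p -> K p.
Proof.
  intros [Hp Hb].
  destruct Hb as [H|[H|[H|H]]]; [apply (edge_sub_K fst 0)|apply (edge_sub_K fst 1)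
    |apply (edge_sub_K snd 0)|apply (edge_sub_K snd 1)]; auto.
Qed.

Lemma Psi_word_image_closed w : closed2 (image (Psi_word k c w) K).
Proof.
  intros p Hp.
  set (o := Psi_word k c w (0, 0)). set (r := cell_size k (length w)).
  assert (Hr : 0 < r) by (apply cell_size_pos; auto).
  set (z := ((fst p - fst o) / r, (snd p - snd o) / r)).
  assert (Ep : p = Psi_word k c w z).
  { rewrite (Psi_word_affine k Hk c w z). fold o r. unfold z; simpl.
    destruct p; simpl. f_equal; field; lra. }
  exists z. split; auto. apply USC_closed. intros e He.
  destruct (Hp (e * r)) as (q & (z' & Hz' & ->) & Hd). apply Rmult_lt_0_compat; auto.
  exists z'. split; auto. rewrite Ep, dist2_Psi_word in Hd by auto. fold r in Hd.
  apply (Rmult_lt_reg_l r); auto. lra.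
Qed.

Lemma Rabs_mul_add_ge x d s b : 0 < s -> Rabs x <= b -> s <= Rabs d ->
  (s - b * s) <= Rabs (x * s + d).
Proof.
  intros Hs Hx Hd. pose proof (Rabs_triang_inv d (- (x * s))).
  rewrite Rabs_Ropp, Rabs_mult, (Rabs_right s) in H by lra.
  replace (d - - (x * s)) with (x * s + d) in H by ring.
  assert (Rabs x * s <= b * s) by (apply Rmult_le_compat_r; lra). lra.
Qed.

Lemma level_corners_separated m w w' : In w (words N m) -> In w' (words N m) -> w <> w' ->
  cell_size k m <= Rabs (fst (Psi_word k c w (0, 0)) - fst (Psi_word k c w' (0, 0))) \/
  cell_size k m <= Rabs (snd (Psi_word k c w (0, 0)) - snd (Psi_word k c w' (0, 0))).
Proof.
  revert w w'. induction m as [|m IH]; intros w w' Hw Hw' Hne.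
  { simpl in Hw, Hw'. destruct Hw as [<-|[]], Hw' as [<-|[]]. congruence. }
  apply in_words in Hw, Hw'. destruct Hw as [Hl Hok], Hw' as [Hl' Hok'].
  destruct w as [|i u], w' as [|j u']; simpl in Hl, Hl'; try lia.
  injection Hl as Hl. injection Hl' as Hl'.
  inversion Hok as [|? ? Hi Hu]; inversion Hok' as [|? ? Hj Hu'].
  pose proof (Psi_word_origin_bounds u Hu) as Bu.
  pose proof (Psi_word_origin_bounds u' Hu') as Bu'. simpl in Bu, Bu'.
  rewrite Hl in Bu. rewrite Hl' in Bu'.
  simpl Psi_word. unfold Psi. cbn [fst snd]. rewrite cell_size_S.
  set (x1 := fst (Psi_word k c u (0, 0)) - fst (Psi_word k c u' (0, 0))).
  set (x2 := snd (Psi_word k c u (0, 0)) - snd (Psi_word k c u' (0, 0))).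
  set (r := cell_size k m) in *.
  assert (Hs : 0 < / INR k) by (apply Rinv_0_lt_compat; lra).
  unfold Rdiv.
  replace (fst (Psi_word k c u (0, 0)) * / INR k + fst (c i) -
           (fst (Psi_word k c u' (0, 0)) * / INR k + fst (c j)))
    with (x1 * / INR k + (fst (c i) - fst (c j))) by (unfold x1; ring).
  replace (snd (Psi_word k c u (0, 0)) * / INR k + snd (c i) -
           (snd (Psi_word k c u' (0, 0)) * / INR k + snd (c j)))
    with (x2 * / INR k + (snd (c i) - snd (c j))) by (unfold x2; ring).
  destruct (Nat.eq_dec i j) as [<-|Hij].
  - rewrite !Rminus_diag_eq, !Rplus_0_r, !Rabs_mult, (Rabs_right (/ INR k)) by lra.
    assert (Hne' : u <> u') by congruence.
    destruct (IH u u') as [S|S]; try (apply in_words; auto). exact Hne'.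
    + left. apply Rmult_le_compat_r; [lra|exact S].
    + right. apply Rmult_le_compat_r; [lra|exact S].
  - assert (Rabs x1 <= 1 - r /\ Rabs x2 <= 1 - r) as [D1 D2]
      by (unfold x1, x2; split; apply Rabs_le; lra).
    destruct (offsets_separated i j Hi Hj Hij) as [S|S]; [left|right];
      [pose proof (Rabs_mul_add_ge x1 _ _ _ Hs D1 S)|pose proof (Rabs_mul_add_ge x2 _ _ _ Hs D2 S)];
      lra.
Qed.

Lemma cells_near_point_le_16 m x (l : list (list nat)) : NoDup l ->
  (forall w, In w l -> In w (words N m) /\
     exists p, image (Psi_word k c w) K p /\ dist2 p x <= cell_size k m) ->
  (length l <= 16)%nat.
Proof.
  intros Hnd Hl. set (s := cell_size k m).
  apply (separated_in_box_length_le_16 l (fun w => Psi_word k c w (0, 0))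
           (fst x - 2 * s) (snd x - 2 * s) s); auto.
  - apply cell_size_pos; auto.
  - intros w Hw. destruct (Hl w Hw) as [Hwm (p & (z & Hz & ->) & Hd)].
    apply in_words in Hwm. destruct Hwm as [Hlen _].
    pose proof (K_sub_unit_square z Hz) as [[Z1 Z2] [Z3 Z4]].
    pose proof (Rle_trans _ _ _ (Rabs_fst_le_dist2 _ x) Hd) as H1.
    pose proof (Rle_trans _ _ _ (Rabs_snd_le_dist2 _ x) Hd) as H2.
    rewrite (Psi_word_affine k Hk c w z), Hlen in H1, H2. fold s in H1, H2. simpl in H1, H2.
    pose proof (cell_size_pos k Hk m) as Hs. fold s in Hs.
    assert (0 <= s * fst z <= s /\ 0 <= s * snd z <= s) by
      (repeat split; try (apply Rmult_le_pos; lra);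
       rewrite <- (Rmult_1_r s) at 2; apply Rmult_le_compat_l; lra).
    apply Rabs_le_between in H1, H2. simpl. lra.
  - intros w w' Hw Hw' Hne.
    apply level_corners_separated; auto; [apply (Hl w Hw)|apply (Hl w' Hw')].
Qed.

Lemma not_cell_near i p : ~ cell k c i p ->
  exists e, 0 < e /\ forall q, dist2 p q < e -> ~ cell k c i q.
Proof.
  intros Hn.
  assert (Hbox : ~ (fst (c i) <= fst p <= fst (c i) + / INR k /\
                    snd (c i) <= snd p <= snd (c i) + / INR k))
    by (intros [H1 H2]; apply Hn, cell_of_box; auto).
  assert (Hout : exists e, 0 < e /\ forall q, dist2 p q < e ->
    ~ (fst (c i) <= fst q <= fst (c i) + / INR k /\ snd (c i) <= snd q <= snd (c i) + / INR k)).
  { destruct (Rlt_dec (fst p) (fst (c i))) as [L|L]; [exists (fst (c i) - fst p)|];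
    [|destruct (Rlt_dec (fst (c i) + / INR k) (fst p)) as [L'|L']; [exists (fst p - (fst (c i) + / INR k))|]];
    [| |destruct (Rlt_dec (snd p) (snd (c i))) as [L''|L'']; [exists (snd (c i) - snd p)|]];
    [| | |destruct (Rlt_dec (snd (c i) + / INR k) (snd p)) as [L'''|L''']; [exists (snd p - (snd (c i) + / INR k))|]];
    try (exfalso; apply Hbox; lra);
    split; try lra; intros q Hq;
    pose proof (Rle_lt_trans _ _ _ (Rabs_fst_le_dist2 p q) Hq) as H1;
    pose proof (Rle_lt_trans _ _ _ (Rabs_snd_le_dist2 p q) Hq) as H2;
    apply Rabs_def2 in H1, H2; lra. }
  destruct Hout as (e & He & Hq). exists e. split; auto.
  intros q Hd Hc. apply (Hq q Hd), box_of_cell, Hc.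
Qed.

Lemma off_cells_open (P : nat -> Prop) :
  open2 (fun p => forall j, (j < N)%nat -> P j -> ~ cell k c j p).
Proof.
  intros p Hp.
  destruct (finite_min_pos (fun j e => (j < N)%nat -> P j ->
              forall q, dist2 p q < e -> ~ cell k c j q) (seq 0 N)) as (e & He & Hall).
  - intros j e e' He' H Hj HP q Hq. apply (H Hj HP q). lra.
  - intros j _. destruct (classic (cell k c j p)) as [Hc|Hc].
    + exists 1. split. lra. intros Hj HP. exfalso. apply (Hp j Hj HP Hc).
    + destruct (not_cell_near j p Hc) as (e & He & H). exists e. auto.
  - exists e. split; auto. intros q Hq j Hj HP. apply (Hall j); auto. apply in_seq; lia.
Qed.

Definition cells_adjacent i j : Prop :=
  (i < N)%nat /\ (j < N)%nat /\ i <> j /\ exists z, cell k c i z /\ cell k c j z.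

Inductive cell_path (i0 : nat) : nat -> nat -> Prop :=
| cell_path_nil : cell_path i0 O i0
| cell_path_cons h i j : cell_path i0 h i -> cells_adjacent i j -> cell_path i0 (S h) j.

(* The cells reachable from [i0] and the remaining cells would split the connected first level
   into two disjoint relatively open parts. *)
Lemma cell_path_exists i0 j : (i0 < N)%nat -> (j < N)%nat -> exists h, cell_path i0 h j.
Proof.
  intros Hi0 Hj. apply NNPP. intros Hj1.
  set (R j := exists h, cell_path i0 h j).
  assert (Hcl : forall i j p, (i < N)%nat -> (j < N)%nat -> R i -> cell k c i p -> cell k c j p -> R j).
  { intros i j' p Hi Hj' [h Hh] Hci Hcj. destruct (Nat.eq_dec i j') as [<-|Hne]; [exists h; auto|].
    exists (S h). apply (cell_path_cons i0 h i j'); auto. repeat split; auto. exists p; auto. }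
  apply USC_connected.
  exists (fun p => forall j, (j < N)%nat -> ~ R j -> ~ cell k c j p),
         (fun p => forall j, (j < N)%nat -> R j -> ~ cell k c j p).
  split; [apply off_cells_open|split; [apply off_cells_open|split; [|split; [|split]]]].
  - intros p (i & Hi & Hc). destruct (classic (R i)) as [Hr|Hr].
    + left. intros j' Hj' Hr' Hc'. apply Hr', (Hcl i j' p); auto.
    + right. intros j' Hj' Hr' Hc'. apply Hr, (Hcl j' i p); auto.
  - exists (Psi k (c i0) (0, 0)).
    assert (Hc : cell k c i0 (Psi k (c i0) (0, 0))) by (exists (0, 0); split; auto; apply unit_square_origin).
    split. exists i0; auto. intros j' Hj' Hr' Hc'. apply Hr', (Hcl i0 j' (Psi k (c i0) (0, 0))); auto. exists O. constructor.
  - exists (Psi k (c j) (0, 0)).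
    assert (Hc : cell k c j (Psi k (c j) (0, 0))) by (exists (0, 0); split; auto; apply unit_square_origin).
    split. exists j; auto. intros j' Hj' Hr' Hc'. apply Hj1, (Hcl j' j (Psi k (c j) (0, 0))); auto.
  - intros p (i & Hi & Hc) HpU HpV. destruct (classic (R i)) as [Hr|Hr].
    + apply (HpV i Hi Hr Hc).
    + apply (HpU i Hi Hr Hc).
Qed.

Lemma cell_graph_diameter : exists H, forall i j, (i < N)%nat -> (j < N)%nat ->
  exists h, (h <= H)%nat /\ cell_path i h j.
Proof.
  destruct (bounded_choice_nat N (fun i H => forall j, (j < N)%nat ->
              exists h, (h <= H)%nat /\ cell_path i h j)) as [H HH].
  - intros i Hi. apply bounded_choice_nat. intros j Hj. apply cell_path_exists; auto.
  - exists H. intros i j Hi Hj. destruct (HH i Hi) as (Hi' & Hle & Hp).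
    destruct (Hp j Hj) as (h & ? & ?). exists h. split; auto. lia.
Qed.

Lemma corner_cell : exists i u, (i < N)%nat /\ square_boundary u /\ Psi k (c i) u = (0, 0).
Proof.
  destruct (USC_bottom_edge 0 ltac:(lra)) as (i & Hi & u & Hu & Eu).
  exists i, u. split; [exact Hi|split; [split; [exact Hu|left]|symmetry; exact Eu]].
  pose proof (offset_bounds i Hi). destruct Hu as [[? ?] [? ?]].
  unfold Psi in Eu. injection Eu as E1 E2.
  assert (0 <= fst u / INR k) by (apply Rdiv_le_0_compat; lra).
  assert (E : fst u / INR k = 0) by lra.
  apply (Rmult_eq_reg_r (/ INR k)). rewrite Rmult_0_l. exact E.
  apply Rinv_neq_0_compat. lra.
Qed.

End Carpet.

(** * Chains of closed sets along a curve *)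

Section ExitChain.
Variables (I : Type) (I_eq_dec : forall a b : I, {a = b} + {a <> b}).
Variables (C : I -> pt -> Prop) (g : R -> pt).
Hypothesis C_closed : forall w, closed2 (C w).
Hypothesis g_cont : forall t, 0 <= t <= 1 -> forall e, 0 < e -> exists d, 0 < d /\
  forall s, 0 <= s <= 1 -> Rabs (s - t) < d -> dist2 (g s) (g t) < e.

Inductive chain : pt -> list I -> pt -> Prop :=
| chain_one w p q : C w p -> C w q -> chain p (w :: nil) q
| chain_cons w l p z q : C w p -> C w z -> chain z l q -> chain p (w :: l) q.

Lemma last_exit a w : 0 <= a <= 1 -> C w (g a) ->
  exists tau, a <= tau <= 1 /\ C w (g tau) /\ forall t, tau < t <= 1 -> ~ C w (g t).
Proof.
  intros Ha Hga. set (E t := a <= t <= 1 /\ C w (g t)).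
  destruct (completeness E) as (tau & Hub & Hlub).
  { exists 1. intros t [Ht _]. lra. }
  { exists a. split; auto. lra. }
  assert (Hat : a <= tau) by (apply Hub; split; auto; lra).
  assert (Ht1 : tau <= 1) by (apply Hlub; intros t [Ht _]; lra).
  exists tau. repeat split; auto.
  - apply C_closed. intros e He.
    destruct (g_cont tau ltac:(lra) e He) as (d & Hd & Hcd).
    destruct (classic (exists t, E t /\ tau - d < t)) as [(t & [Ht Hct] & Htd)|Hn].
    + exists (g t). split; auto. rewrite dist2_sym. apply Hcd. lra.
      assert (t <= tau) by (apply Hub; split; auto). apply Rabs_def1; lra.
    + exfalso. assert (tau <= tau - d); [|lra]. apply Hlub. intros t Ht.
      apply Rnot_lt_le. intros Hlt. apply Hn. exists t. auto.
  - intros t Ht Hct. assert (t <= tau) by (apply Hub; split; auto; lra). lra.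
Qed.

(* Otherwise g(tau) would be at positive distance from every set of Ws. *)
Lemma cover_closed_left tau Ws : 0 <= tau < 1 ->
  (forall t, tau < t <= 1 -> exists w, In w Ws /\ C w (g t)) ->
  exists w, In w Ws /\ C w (g tau).
Proof.
  intros Htau Hcov. apply NNPP. intros Hn.
  destruct (finite_min_pos (fun w e => forall q, C w q -> e <= dist2 (g tau) q) Ws) as (e & He & Hall).
  { intros w e e' He' Hw q Hq. specialize (Hw q Hq). lra. }
  { intros w Hw. assert (Hnc : ~ C w (g tau)) by (intros Hcw; apply Hn; exists w; auto).
    apply NNPP. intros Hne. apply Hnc, C_closed. intros e He.
    apply NNPP. intros Hno. apply Hne. exists e. split; auto. intros q Hq.
    apply Rnot_lt_le. intros Hlt. apply Hno. exists q. auto. }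
  destruct (g_cont tau ltac:(lra) e He) as (d & Hd & Hcd).
  set (s := Rmin (tau + d / 2) 1).
  assert (tau < s <= 1 /\ s <= tau + d / 2) by
    (unfold s; split; [split; [apply Rmin_glb_lt|apply Rmin_r]|apply Rmin_l]; lra).
  destruct (Hcov s ltac:(lra)) as (w & Hw & Hcw).
  specialize (Hall w Hw _ Hcw). rewrite dist2_sym in Hall.
  assert (dist2 (g s) (g tau) < e) by (apply Hcd; [lra|apply Rabs_def1; lra]). lra.
Qed.

(* Follow g from time a: leave the current set at its last exit time and continue with the
   remaining sets, so that every set is used at most once. *)
Lemma exit_chain n Ws a : (length Ws <= n)%nat -> 0 <= a <= 1 ->
  (forall t, a <= t <= 1 -> exists w, In w Ws /\ C w (g t)) ->
  exists l, chain (g a) l (g 1) /\ NoDup l /\ incl l Ws /\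
    (forall w, In w l -> exists t, a <= t <= 1 /\ C w (g t)).
Proof.
  revert Ws a. induction n as [|n IH]; intros Ws a Hlen Ha Hcov;
    destruct (Hcov a ltac:(lra)) as (w0 & Hw0 & Hga).
  { destruct Ws; simpl in *; [contradiction|lia]. }
  destruct (last_exit a w0 Ha Hga) as (tau & Htau & Hgt & Hexit).
  destruct (Req_dec tau 1) as [Et|Nt].
  { exists (w0 :: nil). rewrite <- Et. repeat split.
    - apply chain_one; auto.
    - constructor. intros []. constructor.
    - intros w [<-|[]]; auto.
    - intros w [<-|[]]. exists a. split; auto; lra. }
  set (Ws' := remove I_eq_dec w0 Ws).
  assert (Hcov' : forall t, tau <= t <= 1 -> exists w, In w Ws' /\ C w (g t)).
  { assert (Hafter : forall t, tau < t <= 1 -> exists w, In w Ws' /\ C w (g t)).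
    { intros t Ht. destruct (Hcov t ltac:(lra)) as (w & Hw & Hcw).
      exists w. split; auto. apply in_in_remove; auto. intros ->. apply (Hexit t); auto. }
    intros t Ht. destruct (Req_dec t tau) as [->|Ne].
    - apply cover_closed_left; auto. lra.
    - apply Hafter. lra. }
  assert (Hlen' : (length Ws' <= n)%nat)
    by (pose proof (remove_length_lt I_eq_dec Ws w0 Hw0); unfold Ws'; lia).
  destruct (IH Ws' tau Hlen' ltac:(lra) Hcov') as (l & Hch & Hnd & Hinc & Hmeet).
  exists (w0 :: l). repeat split.
  - apply (chain_cons w0 l (g a) (g tau) (g 1)); auto.
  - constructor; auto. intros Hin. apply Hinc, in_remove in Hin. tauto.
  - intros w [<-|Hw]; auto. apply Hinc, in_remove in Hw. tauto.
  - intros w [<-|Hw]. exists a. split; auto; lra.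
    destruct (Hmeet w Hw) as (t & Ht & Hct). exists t. split; auto; lra.
Qed.

End ExitChain.

(** * Geodesic distances on approximating carpets *)

Definition dG (A : pt -> Prop) (p q : pt) : R := real (geodist A p q).

Lemma dG_sym A p q : dG A p q = dG A q p.
Proof. unfold dG. rewrite geodist_sym. reflexivity. Qed.

Definition same_edge (a b : pt) : Prop :=
  (fst a = fst b /\ (fst a = 0 \/ fst a = 1)) \/ (snd a = snd b /\ (snd a = 0 \/ snd a = 1)).

Lemma seg_same_edge a b t : unit_square a -> unit_square b -> same_edge a b -> 0 <= t <= 1 ->
  square_boundary (seg a b t).
Proof.
  intros [[A1 A2] [A3 A4]] [[B1 B2] [B3 B4]] Hab Ht.
  assert (Hconv : forall x y, 0 <= x <= 1 -> 0 <= y <= 1 -> 0 <= x + t * (y - x) <= 1)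
    by (intros x y Hx Hy; split; nra).
  split. split; simpl; apply Hconv; lra.
  unfold seg; simpl. destruct Hab as [[E Ha]|[E Ha]].
  - rewrite E, (Rminus_diag_eq (fst b)), Rmult_0_r, Rplus_0_r by reflexivity. rewrite <- E. tauto.
  - rewrite E, (Rminus_diag_eq (snd b)), Rmult_0_r, Rplus_0_r by reflexivity. rewrite <- E. tauto.
Qed.

(* Eventual bound on the diameters of the K_n, H being the diameter of the adjacency graph of
   the first-level cells of K: boundary points of first-level cells are within 9 (H + 1) of the
   origin (at most 9 per step of a cell path), and every point within 1 + 2 * 9 (H + 1). *)
Definition diameter_bound (H : nat) : R := 2 + 36 * INR (S H).

Section Approximation.
Variables (k N : nat) (c : nat -> pt) (K : pt -> Prop).
Hypothesis HU : is_USC k N c K.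
Variables (cn : nat -> nat -> pt) (Kn : nat -> pt -> Prop).
Hypothesis HUn : forall n, is_USC k N (cn n) (Kn n).
Hypothesis Hmaps : forall i, (i < N)%nat -> forall z : pt,
  pt_conv (fun n => Psi k (cn n i) z) (Psi k (c i) z).
Hypothesis Hhaus : hausdorff_conv Kn K.
Hypothesis Hequi : geodist_equicont Kn.

Let Hk : (2 <= k)%nat.
Proof. pose proof (USC_k_ge_3 k N c K HU). lia. Qed.

Let Hk3 : 3 <= INR k := INR_k_ge_3 k N c K HU.

Lemma geodist_Kn_finite n p q : Kn n p -> Kn n q ->
  geodist (Kn n) p q = Finite (dG (Kn n) p q).
Proof.
  intros Hp Hq. destruct (Hequi 1 Rlt_0_1) as (eta & Heta & H).
  destruct (H n p q p q Hp Hq Hp Hq) as (a & b & Ha & _).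
  - unfold dist4. rewrite !Rminus_diag_eq by reflexivity.
    rewrite pow_i, !Rplus_0_r, sqrt_0 by lia. exact Heta.
  - unfold dG. rewrite Ha. reflexivity.
Qed.

Lemma dG_ge_0 n p q : Kn n p -> Kn n q -> 0 <= dG (Kn n) p q.
Proof.
  intros Hp Hq. pose proof (geodist_ge_0 (Kn n) p q). rewrite geodist_Kn_finite in H; auto.
Qed.

Lemma dG_triangle n p q r : Kn n p -> Kn n q -> Kn n r ->
  dG (Kn n) p r <= dG (Kn n) p q + dG (Kn n) q r.
Proof.
  intros Hp Hq Hr.
  pose proof (geodist_triangle (Kn n) p q r _ _ (geodist_Kn_finite n p q Hp Hq)
                (geodist_Kn_finite n q r Hq Hr)).
  rewrite geodist_Kn_finite in H; auto.
Qed.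

(* Equicontinuity at the diagonal, where d_{G,n} vanishes. *)
Lemma dG_small e : 0 < e -> exists eta, 0 < eta /\
  forall n p q, Kn n p -> Kn n q -> dist2 p q < eta -> dG (Kn n) p q <= e.
Proof.
  intros He. destruct (Hequi e He) as (eta & Heta & H). exists eta. split; auto.
  intros n p q Hp Hq Hd. destruct (H n p q q q Hp Hq Hq Hq) as (a & b & Ha & Hb & Hab).
  - unfold dist4. rewrite (Rminus_diag_eq (fst q)), (Rminus_diag_eq (snd q)) by reflexivity.
    rewrite pow_i, !Rplus_0_r by lia. exact Hd.
  - rewrite geodist_diag in Hb by auto. injection Hb as <-. unfold dG. rewrite Ha. simpl.
    rewrite Rminus_0_r in Hab. apply Rabs_le_between in Hab. lra.
Qed.

Lemma Kn_Psi n i z : (i < N)%nat -> Kn n z -> Kn n (Psi k (cn n i) z).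
Proof. apply (USC_Psi_K k N (cn n) (Kn n) (HUn n)). Qed.

Lemma Kn_Psi_word n w z : List.Forall (fun i => (i < N)%nat) w -> Kn n z ->
  Kn n (Psi_word k (cn n) w z).
Proof. apply (Psi_word_K k N (cn n) (Kn n) (HUn n)). Qed.

Lemma dG_Psi_le n i p q : (i < N)%nat -> Kn n p -> Kn n q ->
  dG (Kn n) (Psi k (cn n i) p) (Psi k (cn n i) q) <= dG (Kn n) p q / INR k.
Proof.
  intros Hi Hp Hq.
  pose proof (geodist_Psi_le (Kn n) k (cn n i) p q _ ltac:(lia) (fun z => Kn_Psi n i z Hi)
    (geodist_Kn_finite n p q Hp Hq)).
  rewrite geodist_Kn_finite in H by (apply Kn_Psi; auto). exact H.
Qed.

Lemma dG_Psi_word_le n w p q : List.Forall (fun i => (i < N)%nat) w -> Kn n p -> Kn n q ->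
  dG (Kn n) (Psi_word k (cn n) w p) (Psi_word k (cn n) w q) <= cell_size k (length w) * dG (Kn n) p q.
Proof.
  intros Hw Hp Hq. induction Hw as [|i w Hi Hw IH]; simpl.
  - unfold cell_size; simpl. lra.
  - eapply Rle_trans. apply dG_Psi_le; auto; apply Kn_Psi_word; auto.
    rewrite cell_size_S by auto. unfold Rdiv. rewrite Rmult_assoc, (Rmult_comm (/ INR k)), <- Rmult_assoc.
    apply Rmult_le_compat_r; auto. left; apply Rinv_0_lt_compat; lra.
Qed.

Lemma square_boundary_Kn n u : square_boundary u -> Kn n u.
Proof. apply (square_boundary_sub_K k N (cn n) (Kn n) (HUn n)). Qed.

Lemma dG_same_edge n a b : unit_square a -> unit_square b -> same_edge a b -> dG (Kn n) a b <= 2.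
Proof.
  intros Ha Hb Hab.
  assert (Hseg : forall t, 0 <= t <= 1 -> Kn n (seg a b t))
    by (intros t Ht; apply square_boundary_Kn, seg_same_edge; auto).
  assert (Kn n a /\ Kn n b) as [HKa HKb].
  { pose proof (curve_in_seg (Kn n) a b Hseg) as (E0 & E1 & HK & _).
    split; [rewrite <- E0|rewrite <- E1]; apply HK; lra. }
  pose proof (geodist_le_dist2 (Kn n) a b Hseg).
  rewrite geodist_Kn_finite in H by auto. simpl in H.
  pose proof (dist2_unit_square a b Ha Hb). lra.
Qed.

Lemma dG_boundary_origin n u : square_boundary u -> dG (Kn n) u (0, 0) <= 4.
Proof.
  intros Hu. pose proof Hu as [Hsq Hedge]. pose proof Hsq as [[A1 A2] [B1 B2]].
  assert (Hsq10 : unit_square (1, 0)) by (unfold unit_square; simpl; lra).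
  assert (Hsq01 : unit_square (0, 1)) by (unfold unit_square; simpl; lra).
  assert (HK : forall p, square_boundary p -> Kn n p) by apply square_boundary_Kn.
  destruct Hedge as [E|[E|[E|E]]].
  - pose proof (dG_same_edge n u (0, 0) Hsq unit_square_origin ltac:(left; simpl; auto)). lra.
  - eapply Rle_trans. apply (dG_triangle n _ (1, 0)); apply HK; auto.
    split; simpl; auto. apply square_boundary_origin.
    pose proof (dG_same_edge n u (1, 0) Hsq Hsq10 ltac:(left; simpl; auto)).
    pose proof (dG_same_edge n (1, 0) (0, 0) Hsq10 unit_square_origin ltac:(right; simpl; auto)).
    lra.
  - pose proof (dG_same_edge n u (0, 0) Hsq unit_square_origin ltac:(right; simpl; auto)). lra.
  - eapply Rle_trans. apply (dG_triangle n _ (0, 1)); apply HK; auto.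
    split; simpl; auto. apply square_boundary_origin.
    pose proof (dG_same_edge n u (0, 1) Hsq Hsq01 ltac:(right; simpl; auto)).
    pose proof (dG_same_edge n (0, 1) (0, 0) Hsq01 unit_square_origin ltac:(left; simpl; auto)).
    lra.
Qed.

Lemma Psi_word_conv w z : List.Forall (fun i => (i < N)%nat) w ->
  pt_conv (fun n => Psi_word k (cn n) w z) (Psi_word k c w z).
Proof.
  intros Hw e He. induction Hw as [|i w Hi Hw IH] in e, He |- *; simpl.
  - exists O. intros. rewrite dist2_diag. auto.
  - destruct (IH (e / 2) ltac:(lra)) as [n1 H1].
    destruct (Hmaps i Hi (Psi_word k c w z) (e / 2) ltac:(lra)) as [n2 H2].
    exists (max n1 n2). intros n Hn.
    eapply Rle_lt_trans. apply (dist2_triangle _ (Psi k (cn n i) (Psi_word k c w z))).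
    rewrite dist2_Psi by lia. specialize (H1 n ltac:(lia)). specialize (H2 n ltac:(lia)).
    pose proof (dist2_ge_0 (Psi_word k (cn n) w z) (Psi_word k c w z)).
    assert (dist2 (Psi_word k (cn n) w z) (Psi_word k c w z) / INR k <=
            dist2 (Psi_word k (cn n) w z) (Psi_word k c w z))
      by (apply Rcomplements.Rle_div_l; nra).
    lra.
Qed.

Lemma cell_approx w z : List.Forall (fun i => (i < N)%nat) w -> K z -> forall e, 0 < e ->
  eventually (fun n => exists a, Kn n a /\ dist2 (Psi_word k (cn n) w a) (Psi_word k c w z) < e).
Proof.
  intros Hw Hz e He.
  destruct (Hhaus (e / 2) ltac:(lra)) as [n1 H1].
  destruct (Psi_word_conv w z Hw (e / 2) ltac:(lra)) as [n2 H2].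
  exists (max n1 n2). intros n Hn.
  destruct (proj2 (H1 n ltac:(lia)) z Hz) as (a & Ha & Hd).
  exists a. split; auto.
  eapply Rle_lt_trans. apply (dist2_triangle _ (Psi_word k (cn n) w z)).
  rewrite dist2_Psi_word by auto. specialize (H2 n ltac:(lia)).
  pose proof (cell_size_le_1 k Hk (length w)). pose proof (cell_size_pos k Hk (length w)).
  pose proof (dist2_ge_0 a z).
  assert (cell_size k (length w) * dist2 a z <= dist2 a z) by nra. lra.
Qed.

Lemma dG_eventually_small (p q : nat -> pt) z : pt_conv p z -> pt_conv q z ->
  (forall n, Kn n (p n)) -> (forall n, Kn n (q n)) ->
  forall e, 0 < e -> eventually (fun n => dG (Kn n) (p n) (q n) <= e).
Proof.
  intros Hp Hq Hpk Hqk e He. destruct (dG_small e He) as (eta & Heta & H).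
  destruct (Hp (eta / 2) ltac:(lra)) as [n1 H1]. destruct (Hq (eta / 2) ltac:(lra)) as [n2 H2].
  exists (max n1 n2). intros n Hn. apply H; auto.
  eapply Rle_lt_trans. apply (dist2_triangle _ z). rewrite (dist2_sym z).
  specialize (H1 n ltac:(lia)). specialize (H2 n ltac:(lia)). lra.
Qed.

Lemma dG_cell_boundary n i u v : (i < N)%nat -> square_boundary u -> square_boundary v ->
  dG (Kn n) (Psi k (cn n i) u) (Psi k (cn n i) v) <= 8.
Proof.
  intros Hi Hu Hv.
  pose proof (square_boundary_Kn n u Hu). pose proof (square_boundary_Kn n v Hv).
  pose proof (square_boundary_Kn n (0, 0) square_boundary_origin).
  eapply Rle_trans. apply dG_Psi_le; auto.
  assert (dG (Kn n) u v <= 8).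
  { eapply Rle_trans. apply (dG_triangle n u (0, 0) v); auto.
    rewrite (dG_sym _ (0, 0) v).
    pose proof (dG_boundary_origin n u Hu). pose proof (dG_boundary_origin n v Hv). lra. }
  pose proof (dG_ge_0 n u v H H0).
  apply Rcomplements.Rle_div_l; lra.
Qed.

Lemma cell_path_origin_bound istar ustar : (istar < N)%nat -> square_boundary ustar ->
  Psi k (c istar) ustar = (0, 0) ->
  forall h j, cell_path k N c istar h j -> (j < N)%nat /\
    eventually (fun n => forall u, square_boundary u ->
                  dG (Kn n) (Psi k (cn n j) u) (0, 0) <= 9 * INR (S h)).
Proof.
  intros Hi Hus Hc h j Hp.
  assert (HK : forall n i u, (i < N)%nat -> square_boundary u -> Kn n (Psi k (cn n i) u))
    by (intros; apply Kn_Psi; auto; apply square_boundary_Kn; auto).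
  assert (HO : forall n, Kn n (0, 0))
    by (intros; apply square_boundary_Kn, square_boundary_origin).
  induction Hp as [|h i j Hp IH Hadj].
  - split; auto.
    assert (E := dG_eventually_small (fun n => Psi k (cn n istar) ustar) (fun _ => (0, 0)) (0, 0)).
    rewrite <- Hc in E at 1.
    specialize (E (Hmaps istar Hi ustar) (pt_conv_const _) (fun n => HK n istar ustar Hi Hus) HO
                  1 Rlt_0_1).
    revert E; apply filter_imp; intros n Hn u Hu.
    eapply Rle_trans. apply (dG_triangle n _ (Psi k (cn n istar) ustar)); auto.
    pose proof (dG_cell_boundary n istar u ustar Hi Hu Hus). simpl INR. lra.
  - destruct IH as [HiN IH]. destruct Hadj as (_ & HjN & Hij & z & Hzi & Hzj). split; auto.
    destruct (cells_meet_on_boundary k N c K HU j i z HjN HiN (not_eq_sym Hij) Hzj Hzi)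
      as (v & Hv & Ev).
    destruct (cells_meet_on_boundary k N c K HU i j z HiN HjN Hij Hzi Hzj) as (u' & Hu' & Eu').
    assert (E := dG_eventually_small (fun n => Psi k (cn n j) v) (fun n => Psi k (cn n i) u') z).
    rewrite Ev in E at 1. rewrite Eu' in E at 1.
    specialize (E (Hmaps j HjN v) (Hmaps i HiN u') (fun n => HK n j v HjN Hv)
                  (fun n => HK n i u' HiN Hu') 1 Rlt_0_1).
    generalize (eventually_and _ _ IH E); apply filter_imp; intros n [Hn1 Hn2] u Hu.
    specialize (Hn1 u' Hu').
    eapply Rle_trans. apply (dG_triangle n _ (Psi k (cn n j) v)); auto.
    eapply Rle_trans. apply Rplus_le_compat_l, (dG_triangle n _ (Psi k (cn n i) u')); auto.
    pose proof (dG_cell_boundary n j u v HjN Hu Hv). rewrite (S_INR (S h)). lra.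
Qed.

Lemma first_level_boundary_bound H : (forall i j, (i < N)%nat -> (j < N)%nat ->
    exists h, (h <= H)%nat /\ cell_path k N c i h j) ->
  eventually (fun n => forall i, (i < N)%nat -> forall u, square_boundary u ->
                dG (Kn n) (Psi k (cn n i) u) (0, 0) <= 9 * INR (S H)).
Proof.
  intros HH. destruct (corner_cell k N c K HU) as (istar & ustar & Hi & Hus & Hc).
  apply (eventually_forall_lt N (fun i n => forall u, square_boundary u ->
           dG (Kn n) (Psi k (cn n i) u) (0, 0) <= 9 * INR (S H))).
  intros j Hj. destruct (HH istar j Hi Hj) as (h & Hh & Hp).
  destruct (cell_path_origin_bound istar ustar Hi Hus Hc h j Hp) as [_ E].
  revert E; apply filter_imp; intros n Hn u Hu.
  eapply Rle_trans. apply Hn; auto.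
  apply Rmult_le_compat_l; [lra|]. apply le_INR. lia.
Qed.

(* Every cell corner is reached from the origin through a geometric series of first-level
   steps of total length at most 2 R1. *)
Lemma corner_origin_bound n R1 : 0 <= R1 ->
  (forall i, (i < N)%nat -> forall u, square_boundary u ->
     dG (Kn n) (Psi k (cn n i) u) (0, 0) <= R1) ->
  forall w, List.Forall (fun i => (i < N)%nat) w ->
    dG (Kn n) (Psi_word k (cn n) w (0, 0)) (0, 0) <= 2 * R1.
Proof.
  intros HR1 HR w Hw.
  assert (HO : Kn n (0, 0)) by apply square_boundary_Kn, square_boundary_origin.
  induction Hw as [|i w Hi Hw IH]; simpl.
  - unfold dG. rewrite geodist_diag by auto. simpl. lra.
  - assert (HKw : Kn n (Psi_word k (cn n) w (0, 0))) by (apply Kn_Psi_word; auto).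
    eapply Rle_trans. apply (dG_triangle n _ (Psi k (cn n i) (0, 0))); auto; apply Kn_Psi; auto.
    pose proof (dG_Psi_le n i _ _ Hi HKw HO).
    pose proof (HR i Hi (0, 0) square_boundary_origin).
    pose proof (dG_ge_0 n _ _ HKw HO).
    assert (dG (Kn n) (Psi_word k (cn n) w (0, 0)) (0, 0) / INR k <= 2 * R1 / 3)
      by (apply Rcomplements.Rle_div_l; [lra|]; unfold Rdiv; nra).
    lra.
Qed.

Lemma Kn_diameter_bound H : (forall i j, (i < N)%nat -> (j < N)%nat ->
    exists h, (h <= H)%nat /\ cell_path k N c i h j) ->
  eventually (fun n => forall a b, Kn n a -> Kn n b -> dG (Kn n) a b <= diameter_bound H).
Proof.
  intros HH. set (R1 := 9 * INR (S H)).
  assert (HR1 : 0 <= R1) by (unfold R1; pose proof (pos_INR (S H)); lra).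
  destruct (dG_small 1 Rlt_0_1) as (eta & Heta & Hsmall).
  destruct (cell_size_small k Hk (eta / 3)) as [m Hm]. lra.
  generalize (first_level_boundary_bound H HH); apply filter_imp; intros n Hn.
  assert (HO : Kn n (0, 0)) by apply square_boundary_Kn, square_boundary_origin.
  assert (Ha : forall a, Kn n a -> dG (Kn n) a (0, 0) <= 1 + 2 * R1).
  { intros a Ha.
    destruct (K_level_decomp k N (cn n) (Kn n) (HUn n) m a Ha) as (w & z & Hw & Hz & ->).
    apply in_words in Hw. destruct Hw as [Hl Hw].
    assert (HKo : Kn n (Psi_word k (cn n) w (0, 0))) by (apply Kn_Psi_word; auto).
    eapply Rle_trans. apply (dG_triangle n _ (Psi_word k (cn n) w (0, 0))); auto.
    assert (dG (Kn n) (Psi_word k (cn n) w z) (Psi_word k (cn n) w (0, 0)) <= 1).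
    { apply Hsmall; auto. rewrite dist2_Psi_word, Hl by auto.
      pose proof (dist2_unit_square z (0, 0)
        (K_sub_unit_square k N (cn n) (Kn n) (HUn n) z Hz) unit_square_origin).
      pose proof (cell_size_pos k Hk m). nra. }
    pose proof (corner_origin_bound n R1 HR1 Hn w Hw). lra. }
  intros a b HKa HKb. eapply Rle_trans. apply (dG_triangle n a (0, 0) b); auto.
  rewrite (dG_sym _ (0, 0) b). pose proof (Ha a HKa). pose proof (Ha b HKb).
  unfold diameter_bound, R1 in *. lra.
Qed.

Section ShortCurves.
Variable D : R.
Hypothesis HD0 : 0 < D.
Hypothesis HD : eventually (fun n => forall a b, Kn n a -> Kn n b -> dG (Kn n) a b <= D).

(* Pass through the corresponding cell of K_n, whose diameter is at most (cell size) * D. *)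
Lemma cell_transfer m w p q : List.Forall (fun i => (i < N)%nat) w -> length w = m ->
  image (Psi_word k c w) K p -> image (Psi_word k c w) K q -> forall e, 0 < e ->
  exists eps, 0 < eps /\ eventually (fun n => forall a b, Kn n a -> Kn n b ->
    dist2 a p < eps -> dist2 b q < eps -> dG (Kn n) a b <= cell_size k m * D + 2 * e).
Proof.
  intros Hw Hl (zp & Hzp & ->) (zq & Hzq & ->) e He.
  destruct (dG_small e He) as (eta & Heta & Hsmall).
  exists (eta / 2). split. lra.
  generalize (eventually_and _ _ HD (eventually_and _ _ (cell_approx w zp Hw Hzp (eta / 2) ltac:(lra))
                                                (cell_approx w zq Hw Hzq (eta / 2) ltac:(lra)))).
  apply filter_imp. intros n (HDn & (a' & Ha' & Hda') & (b' & Hb' & Hdb')) a b Ha Hb Hda Hdb.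
  set (A := Psi_word k (cn n) w a') in *. set (B := Psi_word k (cn n) w b') in *.
  assert (HA : Kn n A) by (apply Kn_Psi_word; auto).
  assert (HB : Kn n B) by (apply Kn_Psi_word; auto).
  assert (E1 : dG (Kn n) a A <= e).
  { apply Hsmall; auto. eapply Rle_lt_trans. apply (dist2_triangle _ (Psi_word k c w zp)).
    rewrite (dist2_sym _ A). lra. }
  assert (E3 : dG (Kn n) B b <= e).
  { apply Hsmall; auto. eapply Rle_lt_trans. apply (dist2_triangle _ (Psi_word k c w zq)).
    rewrite (dist2_sym _ b). lra. }
  assert (E2 : dG (Kn n) A B <= cell_size k m * D).
  { eapply Rle_trans. apply dG_Psi_word_le; auto. rewrite Hl.
    apply Rmult_le_compat_l. left; apply cell_size_pos; auto. apply HDn; auto. }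
  eapply Rle_trans. apply (dG_triangle n a A b); auto.
  eapply Rle_trans. apply Rplus_le_compat_l, (dG_triangle n A B b); auto.
  lra.
Qed.

Lemma chain_transfer m l p q : chain (list nat) (fun w => image (Psi_word k c w) K) p l q ->
  (forall w, In w l -> List.Forall (fun i => (i < N)%nat) w /\ length w = m) ->
  forall e, 0 < e -> exists eps, 0 < eps /\ eventually (fun n => forall a b, Kn n a -> Kn n b ->
    dist2 a p < eps -> dist2 b q < eps ->
    dG (Kn n) a b <= INR (length l) * (cell_size k m * D + 2 * e)).
Proof.
  intros Hch Hw e He.
  induction Hch as [w p q Hp Hq|w l p z q Hp Hz Hch IH].
  - destruct (Hw w (or_introl eq_refl)) as [Hok Hl].
    destruct (cell_transfer m w p q Hok Hl Hp Hq e He) as (eps & Heps & E).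
    exists eps. split; auto. revert E; apply filter_imp. intros n Hn a b ? ? ? ?.
    simpl. rewrite Rmult_1_l. auto.
  - destruct (Hw w (or_introl eq_refl)) as [Hok Hl].
    destruct IH as (eps2 & Heps2 & E2). intros; apply Hw; right; auto.
    destruct (cell_transfer m w p z Hok Hl Hp Hz e He) as (eps1 & Heps1 & E1).
    assert (HzK : K z) by (destruct Hz as (z' & Hz' & ->); apply (Psi_word_K k N c K HU); auto).
    set (eps := Rmin eps1 eps2).
    assert (0 < eps /\ eps <= eps1 /\ eps <= eps2) as (Heps & ? & ?)
      by (unfold eps; repeat split; [apply Rmin_glb_lt|apply Rmin_l|apply Rmin_r]; auto).
    exists eps. split; auto.
    generalize (eventually_and _ _ (Hhaus eps Heps) (eventually_and _ _ E1 E2)).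
    apply filter_imp. intros n ([_ Hh] & Hn1 & Hn2) a b Ha Hb Hda Hdb.
    destruct (Hh z HzK) as (z' & Hz'K & Hdz').
    eapply Rle_trans. apply (dG_triangle n a z' b); auto.
    pose proof (Hn1 a z' Ha Hz'K ltac:(lra) ltac:(lra)).
    pose proof (Hn2 z' b Hz'K Hb ltac:(lra) ltac:(lra)).
    simpl length. rewrite S_INR. lra.
Qed.

(* A curve of length L <= k^-m stays in the closed ball of radius k^-m around its start, which
   meets at most 16 level-m cells; an exit chain through them is then transferred to K_n. *)
Lemma short_curve_estimate x y g L m xn yn : curve_in K x y g -> curve_length g = Finite L ->
  L <= cell_size k m -> (forall n, Kn n (xn n)) -> (forall n, Kn n (yn n)) ->
  pt_conv xn x -> pt_conv yn y -> forall e, 0 < e ->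
  eventually (fun n => dG (Kn n) (xn n) (yn n) <= 16 * (cell_size k m * D + 2 * e)).
Proof.
  intros Hc HL HLm Hxn Hyn Cx Cy e He. pose proof Hc as (G0 & G1 & GK & Gc).
  destruct (exit_chain (list nat) (list_eq_dec Nat.eq_dec) (fun w => image (Psi_word k c w) K) g
    (Psi_word_image_closed k N c K HU) Gc (length (words N m)) (words N m) 0 (le_n _)
    ltac:(lra)) as (l & Hch & Hnd & Hinc & Hmeet).
  { intros t Ht. destruct (K_level_decomp k N c K HU m (g t) (GK t Ht)) as (w & z & Hw & Hz & Ez).
    exists w. split; auto. exists z. auto. }
  rewrite G0, G1 in Hch.
  assert (Hlen : (length l <= 16)%nat).
  { apply (cells_near_point_le_16 k N c K HU m x l Hnd). intros w Hw. split. apply Hinc; auto.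
    destruct (Hmeet w Hw) as (t & Ht & Hct). exists (g t). split; auto.
    rewrite dist2_sym, <- G0. pose proof (dist2_le_curve_length g L t HL Ht). lra. }
  destruct (chain_transfer m l x y Hch) with (e := e) as (eps & Heps & E); auto.
  { intros w Hw. apply Hinc, in_words in Hw. tauto. }
  generalize (eventually_and _ _ E (eventually_and _ _ (Cx eps Heps) (Cy eps Heps))).
  apply filter_imp. intros n (Hn & Hx & Hy).
  eapply Rle_trans. apply Hn; auto.
  pose proof (cell_size_pos k Hk m).
  apply Rmult_le_compat_r. nra. replace 16 with (INR 16) by (simpl; lra). apply le_INR. auto.
Qed.

Lemma limsup_le_curve_length x y g L xn yn : curve_in K x y g -> curve_length g = Finite L ->
  (forall n, Kn n (xn n)) -> (forall n, Kn n (yn n)) -> pt_conv xn x -> pt_conv yn y ->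
  Rbar_le (LimSup_seq (fun n => dG (Kn n) (xn n) (yn n))) (Finite (16 * INR k * D * L)).
Proof.
  intros Hc HL Hxn Hyn Cx Cy. pose proof (curve_length_ge_0 g L HL).
  set (C := 16 * INR k * D). assert (HC : 0 < C) by (unfold C; nra).
  assert (Hbig : forall L', L < L' -> Rbar_le (LimSup_seq (fun n => dG (Kn n) (xn n) (yn n)))
                                              (Finite (C * L'))).
  { intros L' HL'. destruct (Rlt_le_dec 1 L') as [H1|H1].
    - apply LimSup_le_eventually. revert HD; apply filter_imp. intros n Hn.
      eapply Rle_trans. apply Hn; auto.
      assert (1 <= 16 * INR k * L') by nra.
      replace (C * L') with (D * (16 * INR k * L')) by (unfold C; ring).
      rewrite <- (Rmult_1_r D) at 1. apply Rmult_le_compat_l; lra.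
    - destruct (cell_size_level k Hk L' ltac:(lra) H1) as (m & Hm1 & Hm2).
      apply Rbar_le_of_le_add_eps. intros e He. apply LimSup_le_eventually.
      generalize (short_curve_estimate x y g L m xn yn Hc HL ltac:(lra) Hxn Hyn Cx Cy
                    (e / 32) ltac:(lra)).
      apply filter_imp. intros n Hn. rewrite cell_size_S in Hm1 by auto.
      apply Rcomplements.Rlt_div_l in Hm1; [|lra].
      unfold C. nra. }
  apply Rbar_le_of_le_add_eps. intros e He.
  replace (C * L + e) with (C * (L + e / C)) by (field; lra).
  apply Hbig. pose proof (Rdiv_lt_0_compat e C He HC). lra.
Qed.

End ShortCurves.

End Approximation.

Theorem lemma7p6 :
  forall (k N : nat) (c : nat -> pt) (K : pt -> Prop),
    is_USC k N c K ->
    exists C : R, 0 < C /\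
      forall (cn : nat -> nat -> pt) (Kn : nat -> pt -> Prop),
        (forall n, is_USC k N (cn n) (Kn n)) ->
        (forall i, (i < N)%nat -> forall z : pt,
            pt_conv (fun n => Psi k (cn n i) z) (Psi k (c i) z)) ->
        hausdorff_conv Kn K ->
        geodist_equicont Kn ->
        forall (x y : pt) (xn yn : nat -> pt),
          K x -> K y ->
          (forall n, Kn n (xn n)) -> (forall n, Kn n (yn n)) ->
          pt_conv xn x -> pt_conv yn y ->
          Rbar_le (LimSup_seq (fun n => real (geodist (Kn n) (xn n) (yn n))))
                  (Rbar_mult (Finite C) (geodist K x y)).
Proof.
  intros k N c K HU.
  destruct (cell_graph_diameter k N c K HU) as [H HH].
  set (D := diameter_bound H).
  assert (HD : 0 < D) by (unfold D, diameter_bound; pose proof (pos_INR (S H)); lra).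
  pose proof (INR_k_ge_3 k N c K HU).
  exists (16 * INR k * D). split; [nra|].
  intros cn Kn HUn Hmaps Hhaus Hequi x y xn yn _ _ Hxn Hyn Cx Cy.
  apply Rbar_le_mult_geodist; [nra|]. intros g L Hc HL.
  apply (limsup_le_curve_length k N c K HU cn Kn HUn Hmaps Hhaus Hequi D HD
           (Kn_diameter_bound k N c K HU cn Kn HUn Hmaps Hequi H HH) x y g); auto.
Qed.
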